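(* Let $H$ be a reduced double-well type potential with $H_\infty^0\le H_\infty^1$ and $0<\tfrac12(H_\infty^1+H_\infty^0)\le H_{min}^1+H_\infty^0$, and put $\gamma:=\tfrac12(H_\infty^0+H_\infty^1)$. Then, as $\beta\to+\infty$ (with $f\sim g$ meaning $f/g\to1$): $\lambda_\beta-1\sim c\,e^{-\beta\gamma}$; $F_\beta^0(\lambda_\beta)\sim\frac{e^{-\beta H_\infty^0}}{\lambda_\beta-1}\sim\frac1c e^{\beta(H_\infty^1-H_\infty^0)/2}$; $\tilde F_\beta^0(\lambda_\beta)\sim\frac{e^{-\beta H_\infty^0}}{(\lambda_\beta-1)^2}\sim\frac1{c^2}e^{\beta H_\infty^1}$; $F_\beta^1(\lambda_\beta)\sim c\,e^{-\beta(H_\infty^1-H_\infty^0)/2}$; $\tilde F_\beta^1(\lambda_\beta)\sim\frac{e^{-\beta H_\infty^1}}{(\lambda_\beta-1)^2}\sim\frac1{c^2}e^{\beta H_\infty^0}$; and consequently $\mu_\beta[0]/\mu_\beta[1]\to1/c^2$.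
   Context: $\Sigma:=\{0,1\}^{\mathbb N}$. A reduced double-well type potential is a continuous nonnegative $H:\Sigma\to\mathbb R$ with summable variation such that $H=0$ on $[00]\cup[11]$, $H=H_n^0>0$ on $[01^n0]$, $H=H_n^1>0$ on $[10^n1]$ ($n\ge1$), and $\sum_{k\ge1}\sup_{n\ge0}|H_k^i-H_{k+n}^i|<\infty$ ($i=0,1$). $H_\infty^i:=\lim_nH_n^i$, $H_{min}^i:=\inf_nH_n^i$. $\kappa:=\mathrm{card}\{n\ge1:\tfrac12(H_\infty^1+H_\infty^0)=H_n^1+H_\infty^0\}$, $c:=\frac{\kappa+\sqrt{\kappa^2+4}}2$. $\mathcal L_\beta[\Phi](x)=e^{-\beta H(0x)}\Phi(0x)+e^{-\beta H(1x)}\Phi(1x)$; $\Phi_\beta$ its unique positive continuous eigenfunction with $\max\Phi_\beta=1$, eigenvalue $\lambda_\beta$; $\nu_\beta$ the unique probability with $\mathcal L_\beta^*\nu_\beta=\lambda_\beta\nu_\beta$; $\mu_\beta:=\Phi_\beta\nu_\beta/\int\Phi_\beta d\nu_\beta$. $F_\beta^i(\lambda):=\sum_{k\ge1}\lambda^{-k}e^{-\beta H_k^i}$, $\tilde F_\beta^i(\lambda):=\sum_{k\ge1}k\lambda^{-k}e^{-\beta H_k^i}$. *)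

From Stdlib Require Import Reals Lra List ClassicalEpsilon.
Open Scope R_scope.

(* Sigma = {0,1}^N ; bit 0 is [false], bit 1 is [true]. *)
Definition Sigma := nat -> bool.

Definition agree (n : nat) (x y : Sigma) : Prop := forall i, (i < n)%nat -> x i = y i.

Definition contS (f : Sigma -> R) : Prop :=
  forall x eps, 0 < eps -> exists N, forall y, agree N x y -> Rabs (f y - f x) < eps.

Definition scons (b : bool) (x : Sigma) : Sigma :=
  fun n => match n with O => b | S m => x m end.

(* summable variation: sum_{n>=1} var_n(H) < oo, var_n(H) = sup{|H x - H y| : x,y agree on n coords} *)
Definition summable_variation (H : Sigma -> R) : Prop :=
  exists v : nat -> R,
    (forall n x y, agree (S n) x y -> Rabs (H x - H y) <= v n) /\
    exists l, infinite_sum v l.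

Definition in_block (b : bool) (n : nat) (x : Sigma) : Prop :=
  x O = b /\ (forall i, (1 <= i <= n)%nat -> x i = negb b) /\ x (S n) = b.

Definition reduced_double_well (H : Sigma -> R) (H0 H1 : nat -> R) : Prop :=
  contS H /\ (forall x, 0 <= H x) /\ summable_variation H /\
  (forall x, x O = x 1%nat -> H x = 0) /\
  (forall n x, (1 <= n)%nat -> in_block false n x -> H x = H0 n) /\
  (forall n x, (1 <= n)%nat -> in_block true n x -> H x = H1 n) /\
  (forall n, (1 <= n)%nat -> 0 < H0 n) /\
  (forall n, (1 <= n)%nat -> 0 < H1 n) /\
  (exists w : nat -> R, (forall k n, (1 <= k)%nat -> Rabs (H0 k - H0 (k + n)%nat) <= w k) /\
     exists l, infinite_sum (fun k => w (S k)) l) /\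
  (exists w : nat -> R, (forall k n, (1 <= k)%nat -> Rabs (H1 k - H1 (k + n)%nat) <= w k) /\
     exists l, infinite_sum (fun k => w (S k)) l).

Definition Lop (H : Sigma -> R) (beta : R) (f : Sigma -> R) : Sigma -> R :=
  fun x => exp (- beta * H (scons false x)) * f (scons false x)
         + exp (- beta * H (scons true x)) * f (scons true x).

Definition is_eigenfunction (H : Sigma -> R) (beta lam : R) (Phi : Sigma -> R) : Prop :=
  contS Phi /\ (forall x, 0 < Phi x) /\
  (forall x, Lop H beta Phi x = lam * Phi x) /\
  (forall x, Phi x <= 1) /\ (exists x, Phi x = 1).

(* Borel probability measures on Sigma, represented (Riesz) as positive normalized
   linear functionals on C(Sigma); only values on continuous functions matter. *)
Definition is_prob_functional (nu : (Sigma -> R) -> R) : Prop :=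
  (forall f g, contS f -> contS g -> nu (fun x => f x + g x) = nu f + nu g) /\
  (forall a f, contS f -> nu (fun x => a * f x) = a * nu f) /\
  (forall f, contS f -> (forall x, 0 <= f x) -> 0 <= nu f) /\
  nu (fun _ => 1) = 1.

Definition is_eigenmeasure (H : Sigma -> R) (beta lam : R) (nu : (Sigma -> R) -> R) : Prop :=
  is_prob_functional nu /\ forall f, contS f -> nu (Lop H beta f) = lam * nu f.

Definition ind (b : bool) (x : Sigma) : R := if Bool.eqb (x O) b then 1 else 0.

Definition mu_cyl (Phi : Sigma -> R) (nu : (Sigma -> R) -> R) (b : bool) : R :=
  nu (fun x => Phi x * ind b x) / nu Phi.

Definition series (u : nat -> R) : R := epsilon (inhabits 0) (fun l => infinite_sum u l).

Definition Fb (Hi : nat -> R) (beta lam : R) : R :=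
  series (fun k => / lam ^ (S k) * exp (- beta * Hi (S k))).
Definition Ftb (Hi : nat -> R) (beta lam : R) : R :=
  series (fun k => INR (S k) * / lam ^ (S k) * exp (- beta * Hi (S k))).

Definition asym (f g : R -> R) : Prop :=
  forall eps, 0 < eps -> exists B, forall beta, B <= beta -> Rabs (f beta / g beta - 1) < eps.

Definition lim_infty (f : R -> R) (l : R) : Prop :=
  forall eps, 0 < eps -> exists B, forall beta, B <= beta -> Rabs (f beta - l) < eps.

(* The eigenmeasure is explicit on cylinders: splitting [b (~b)] by the length of the block
   of [~b] gives [nu[b (~b)] = F^b(lam) nu[(~b) b]], hence [F^0(lam) F^1(lam) = 1].  The
   eigenfunction is explicit too: on [b (~b)^{n+1} ...] it is a constant times the tail
   [sum_{k>n} lam^{n-k} e^{-beta H_k^{~b}}], so by uniqueness [Phi] is a multiple of it, and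
   integrating it over [[b]] gives [mu[0] / mu[1] = F^0(lam)^2 Ftilde^1(lam) / Ftilde^0(lam)].
   As [beta -> oo], put [y = e^{-beta gamma} / (lam - 1)] and [A = e^{beta (H^1_oo - H^0_oo) / 2}].
   Summable variation and the gaps above the resonant level give [F^0(lam) = A (y + o(1))] and
   [F^1(lam) = (y + kappa + o(1)) / A], each of the [kappa] levels [H_n^1 = gamma - H^0_oo]
   contributing [1].  Hence [y (y + kappa) -> 1], i.e. [y -> 1/c], from which every stated
   equivalent follows, together with [Ftilde^b(lam) ~ e^{-beta H^b_oo} / (lam - 1)^2]. *)

From Pilot Require Import Defs.
From Stdlib Require Import Reals List Lra Lia ClassicalEpsilon ConstructiveEpsilon
  FunctionalExtensionality Classical Bool.
From Coquelicot Require Import Coquelicot.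
Import ListNotations.
Open Scope R_scope.

(** * Continuity and compactness on [Sigma] *)

Lemma agree_mono n m x y : (m <= n)%nat -> agree n x y -> agree m x y.
Proof. intros Hm Ha i Hi. apply Ha; lia. Qed.

Lemma agree_scons n b x y : agree n x y -> agree (S n) (scons b x) (scons b y).
Proof. intros Ha [|i] Hi; simpl; auto. apply Ha; lia. Qed.

Lemma contS_const c : contS (fun _ => c).
Proof. intros x e He. exists O. intros. rewrite Rminus_diag, Rabs_R0; auto. Qed.

Lemma contS_plus f g : contS f -> contS g -> contS (fun x => f x + g x).
Proof.
  intros Hf Hg x e He.
  destruct (Hf x (e / 2)) as [N1 H1]; [lra|].
  destruct (Hg x (e / 2)) as [N2 H2]; [lra|].
  exists (max N1 N2). intros y Hy.
  specialize (H1 y (agree_mono _ _ _ _ (Nat.le_max_l _ _) Hy)).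
  specialize (H2 y (agree_mono _ _ _ _ (Nat.le_max_r _ _) Hy)).
  replace (f y + g y - (f x + g x)) with ((f y - f x) + (g y - g x)) by ring.
  eapply Rle_lt_trans; [apply Rabs_triang | lra].
Qed.

Lemma contS_mult f g : contS f -> contS g -> contS (fun x => f x * g x).
Proof.
  intros Hf Hg x e He.
  set (M := Rabs (f x) + Rabs (g x) + 1).
  assert (HM : 0 < M) by (unfold M; pose proof (Rabs_pos (f x)); pose proof (Rabs_pos (g x)); lra).
  assert (Hd : 0 < e / (2 * M)) by (apply Rdiv_lt_0_compat; lra).
  assert (HdM : e / (2 * M) * M = e / 2) by (field; lra).
  destruct (Hf x _ Hd) as [N1 H1].
  destruct (Hg x (Rmin 1 (e / (2 * M)))) as [N2 H2]; [apply Rmin_pos; lra|].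
  exists (max N1 N2). intros y Hy.
  specialize (H1 y (agree_mono _ _ _ _ (Nat.le_max_l _ _) Hy)).
  specialize (H2 y (agree_mono _ _ _ _ (Nat.le_max_r _ _) Hy)).
  pose proof (Rmin_l 1 (e / (2 * M))). pose proof (Rmin_r 1 (e / (2 * M))).
  assert (Hgy : Rabs (g y) <= M).
  { pose proof (Rabs_triang_inv (g y) (g x)). unfold M. pose proof (Rabs_pos (f x)). lra. }
  replace (f y * g y - f x * g x) with ((f y - f x) * g y + f x * (g y - g x)) by ring.
  eapply Rle_lt_trans; [apply Rabs_triang|]. rewrite !Rabs_mult.
  assert (Rabs (f y - f x) * Rabs (g y) <= e / (2 * M) * M)
    by (apply Rmult_le_compat; try apply Rabs_pos; lra).
  assert (Rabs (f x) * Rabs (g y - g x) < M * (e / (2 * M))).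
  { apply Rle_lt_trans with (M * Rabs (g y - g x)).
    - apply Rmult_le_compat_r; [apply Rabs_pos|]. unfold M. pose proof (Rabs_pos (g x)). lra.
    - apply Rmult_lt_compat_l; lra. }
  lra.
Qed.

Lemma contS_comp f F : contS f -> (forall x, continuity_pt F (f x)) -> contS (fun x => F (f x)).
Proof.
  intros Hf HF x e He.
  destruct (HF x e He) as [d [Hd Hd2]].
  destruct (Hf x d Hd) as [N HN].
  exists N. intros y Hy.
  destruct (Req_dec (f y) (f x)) as [E|E].
  - rewrite E, Rminus_diag, Rabs_R0; auto.
  - apply (Hd2 (f y)). split; [split; [exact I | auto] | apply HN; auto].
Qed.

Lemma contS_scons f b : contS f -> contS (fun x => f (scons b x)).
Proof.
  intros Hf x e He. destruct (Hf (scons b x) e He) as [N HN].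
  exists N. intros y Hy. apply HN, (agree_mono (S N)); [lia|]. apply agree_scons; auto.
Qed.

Lemma contS_exp f : contS f -> contS (fun x => exp (f x)).
Proof. intros Hf. apply contS_comp; auto. intros x. apply derivable_continuous_pt,
    derivable_pt_exp. Qed.

Lemma contS_inv f : contS f -> (forall x, f x <> 0) -> contS (fun x => / f x).
Proof.
  intros Hf Hn. apply contS_comp; auto. intros x.
  apply (continuity_pt_inv (fun r => r)); [apply derivable_continuous_pt, derivable_pt_id | apply Hn].
Qed.

Definition set_coord (s : Sigma) (n : nat) (b : bool) : Sigma :=
  fun i => if Nat.eqb i n then b else s i.

Lemma agree_set_coord n s y :
  agree n s y -> agree (S n) (set_coord s n false) y \/ agree (S n) (set_coord s n true) y.
Proof.
  intros Ha. destruct (y n) eqn:E; [right | left]; intros i Hi; unfold set_coord;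
    destruct (Nat.eqb_spec i n); subst; auto; apply Ha; lia.
Qed.

Fixpoint koenig_path (P : nat -> Sigma -> Prop) (n : nat) : Sigma :=
  match n with
  | O => fun _ => false
  | S m =>
      let s := koenig_path P m in
      if excluded_middle_informative (P (S m) (set_coord s m false))
      then set_coord s m false else set_coord s m true
  end.

Lemma koenig (P : nat -> Sigma -> Prop) :
  P O (fun _ => false) ->
  (forall n s, P n s -> P (S n) (set_coord s n false) \/ P (S n) (set_coord s n true)) ->
  exists x, forall n, exists s, agree n x s /\ P n s.
Proof.
  intros H0 Hs.
  assert (Inv : forall n, P n (koenig_path P n)).
  { induction n; simpl; auto.
    destruct (excluded_middle_informative _); auto. destruct (Hs _ _ IHn); tauto. }
  assert (Stable : forall k n i, (i < n)%nat -> koenig_path P (k + n) i = koenig_path P n i).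
  { induction k; intros n i Hi; simpl; auto. rewrite <- (IHk n i Hi).
    destruct (excluded_middle_informative _); unfold set_coord;
      destruct (Nat.eqb_spec i (k + n)); auto; lia. }
  exists (fun i => koenig_path P (S i) i). intros n. exists (koenig_path P n). split; auto.
  intros i Hi. replace n with ((n - S i) + S i)%nat by lia. rewrite Stable by lia. auto.
Qed.

(* The compactness of Sigma, in the form of Koenig's lemma. *)
Lemma cluster_point_below (g : Sigma -> R) (D : R -> Prop) :
  (forall a b, D a -> D b -> D (Rmin a b)) ->
  (forall M, D M -> exists y, g y < M) ->
  exists x, forall n M, D M -> exists y, agree n x y /\ g y < M.
Proof.
  intros Dmin HD.
  set (P := fun n s => forall M, D M -> exists y, agree n s y /\ g y < M).
  assert (P0 : P O (fun _ => false)).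
  { intros M HM. destruct (HD M HM) as [y Hy]. exists y. split; auto. intros i Hi; lia. }
  assert (PS : forall n s, P n s -> P (S n) (set_coord s n false) \/ P (S n) (set_coord s n true)).
  { intros n s Hp. apply NNPP. intros Hno. apply not_or_and in Hno as [A B].
    apply not_all_ex_not in A as [M1 A]. apply imply_to_and in A as [D1 A].
    apply not_all_ex_not in B as [M2 B]. apply imply_to_and in B as [D2 B].
    destruct (Hp (Rmin M1 M2) (Dmin _ _ D1 D2)) as [y [Hy1 Hy2]].
    pose proof (Rmin_l M1 M2). pose proof (Rmin_r M1 M2).
    destruct (agree_set_coord _ _ _ Hy1) as [C|C]; [apply A | apply B];
      exists y; split; auto; lra. }
  destruct (koenig P P0 PS) as [x Hx]. exists x. intros n M HM.
  destruct (Hx n) as [s [Hs Ps]]. destruct (Ps M HM) as [y [Hy1 Hy2]].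
  exists y. split; auto. intros i Hi. rewrite Hs; auto.
Qed.

Lemma contS_bounded_below g : contS g -> exists m, forall y, m <= g y.
Proof.
  intros Hg. apply NNPP. intros Hn.
  destruct (cluster_point_below g (fun _ => True)) as [x Hx]; auto.
  { intros M _. apply NNPP. intros HM. apply Hn. exists M. intros y.
    apply Rnot_lt_le. intros Hl. apply HM. exists y; auto. }
  destruct (Hg x 1) as [N HN]; [lra|].
  destruct (Hx N (g x - 1) I) as [y [Hy1 Hy2]].
  specialize (HN y Hy1). apply Rabs_def2 in HN. lra.
Qed.

Lemma contS_min g : contS g -> exists x, forall y, g x <= g y.
Proof.
  intros Hg. destruct (contS_bounded_below g Hg) as [m0 Hm0].
  set (E := fun r => exists y, r = - g y).
  destruct (completeness E) as [s [Hs1 Hs2]].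
  { exists (- m0). intros r [y ->]. specialize (Hm0 y). lra. }
  { exists (- g (fun _ => false)), (fun _ => false); auto. }
  assert (Lb : forall y, - s <= g y).
  { intros y. assert (- g y <= s) by (apply Hs1; exists y; auto). lra. }
  destruct (cluster_point_below g (fun M => - s < M)) as [x Hx].
  { intros a b Ha Hb. apply Rmin_case; auto. }
  { intros M HM. apply NNPP. intros Hn. assert (s <= - M); [|lra].
    apply Hs2. intros r [y ->]. apply Rnot_lt_le. intros Hl. apply Hn. exists y. lra. }
  exists x. intros y. eapply Rle_trans; [|apply Lb].
  apply Rnot_lt_le. intros Hl. set (e := (g x + s) / 2).
  destruct (Hg x e) as [N HN]; [unfold e; lra|].
  destruct (Hx N (- s + e)) as [z [Hz1 Hz2]]; [unfold e; lra|].
  specialize (HN z Hz1). apply Rabs_def2 in HN. unfold e in *. lra.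
Qed.

Lemma contS_max g : contS g -> exists x, forall y, g y <= g x.
Proof.
  intros Hg. destruct (contS_min (fun x => -1 * g x)) as [x Hx].
  - apply contS_mult; auto. apply contS_const.
  - exists x. intros y. specialize (Hx y). lra.
Qed.

(** * Cylinders and blocks *)

Definition shift (x : Sigma) : Sigma := fun n => x (S n).

Fixpoint has_prefix (w : list bool) (x : Sigma) : bool :=
  match w with
  | nil => true
  | b :: w' => Bool.eqb (x O) b && has_prefix w' (shift x)
  end.

Definition cyl (w : list bool) (x : Sigma) : R := if has_prefix w x then 1 else 0.

Lemma has_prefix_nth w : forall x,
  has_prefix w x = true <-> forall i, (i < length w)%nat -> x i = nth i w false.
Proof.
  induction w as [|b w IH]; intros x; simpl.
  - split; auto. intros _ i Hi; lia.
  - rewrite andb_true_iff, IH. split.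
    + intros [E H] [|i] Hi; simpl; [apply eqb_prop in E; auto | apply (H i); lia].
    + intros H. split; [apply eqb_true_iff, (H O); lia|]. intros i Hi. apply (H (S i)); lia.
Qed.

Lemma has_prefix_agree w x y : agree (length w) x y -> has_prefix w x = has_prefix w y.
Proof.
  revert x y; induction w as [|b w IH]; intros x y Ha; simpl; auto.
  rewrite (Ha O) by (simpl; lia). f_equal. apply IH. intros i Hi. apply (Ha (S i)). simpl; lia.
Qed.

Lemma contS_cyl w : contS (cyl w).
Proof.
  intros x e He. exists (length w). intros y Hy. unfold cyl.
  rewrite (has_prefix_agree w x y Hy), Rminus_diag, Rabs_R0; auto.
Qed.

Lemma cyl_scons b c w x : cyl (b :: w) (scons c x) = if Bool.eqb c b then cyl w x else 0.
Proof. unfold cyl. simpl. destruct (Bool.eqb c b); auto. Qed.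

Lemma cyl_app w b x : cyl w x = cyl (w ++ [b]) x + cyl (w ++ [negb b]) x.
Proof.
  revert x. induction w as [|a w IH]; intros x; unfold cyl in *; simpl.
  - destruct (x O), b; simpl; ring.
  - destruct (Bool.eqb (x O) a); simpl; [apply IH | ring].
Qed.

Lemma cyl_0_1 w x : cyl w x = 0 \/ cyl w x = 1.
Proof. unfold cyl; destruct (has_prefix w x); auto. Qed.

Lemma cyl_head b w x : cyl (b :: w) x <> 0 -> x O = b.
Proof.
  unfold cyl. simpl. destruct (Bool.eqb (x O) b) eqn:E; simpl; [intros _; apply eqb_prop; auto | lra].
Qed.

Lemma ind_cyl (b : bool) : Defs.ind b = cyl [b].
Proof. apply functional_extensionality; intros x. unfold Defs.ind, cyl. simpl. rewrite andb_true_r.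
    auto. Qed.

(** [first_change x = Some n] iff [x 0 = ... = x n <> x (n + 1)]. *)
Definition first_change (x : Sigma) : option nat :=
  match excluded_middle_informative (exists n, x (S n) <> x O) with
  | left E => Some (proj1_sig (epsilon_smallest (fun n => x (S n) <> x O)
                 (fun n => match bool_dec (x (S n)) (x O) with
                           | left e => right (fun h => h e) | right e => left e end) E))
  | right _ => None
  end.

Lemma first_change_Some x n : first_change x = Some n ->
  x (S n) <> x O /\ forall i, (i <= n)%nat -> x i = x O.
Proof.
  unfold first_change. destruct (excluded_middle_informative _) as [E|E]; [|discriminate].
  destruct (epsilon_smallest _ _ E) as [m [Hm1 Hm2]]. simpl. intros Hs; inversion Hs; subst.
  split; auto. intros [|i] Hi; auto. destruct (bool_dec (x (S i)) (x O)) as [e|e]; auto.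
  specialize (Hm2 i e). lia.
Qed.

Lemma first_change_None x : first_change x = None -> forall i, x i = x O.
Proof.
  unfold first_change. destruct (excluded_middle_informative _) as [E|E]; [discriminate|].
  intros _ [|i]; auto. destruct (bool_dec (x (S i)) (x O)) as [e|e]; auto.
  exfalso; apply E; exists i; auto.
Qed.

Lemma first_change_eq_Some x n : x (S n) <> x O -> (forall i, (i <= n)%nat -> x i = x O) ->
  first_change x = Some n.
Proof.
  intros H1 H2. destruct (first_change x) as [m|] eqn:E.
  - apply first_change_Some in E as [E1 E2]. f_equal.
    destruct (Nat.lt_total m n) as [L|[L|L]]; auto.
    + exfalso. apply E1, H2. lia.
    + exfalso. apply H1, E2. lia.
  - exfalso. apply H1, (first_change_None x E).
Qed.

Lemma first_change_eq_None x : (forall i, x i = x O) -> first_change x = None.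
Proof.
  intros H. destruct (first_change x) as [m|] eqn:E; auto.
  apply first_change_Some in E as [E _]. exfalso; apply E, H.
Qed.

Lemma first_change_scons_same b x : x O = b ->
  first_change (scons b x) = option_map S (first_change x).
Proof.
  intros Hb. destruct (first_change x) as [n|] eqn:E; simpl.
  - apply first_change_Some in E as [E1 E2]. apply first_change_eq_Some; simpl; [congruence|].
    intros [|i] Hi; simpl; auto. rewrite E2 by lia. auto.
  - apply first_change_eq_None. intros [|i]; simpl; auto. rewrite (first_change_None x E i). auto.
Qed.

Lemma first_change_scons_diff b x : x O <> b -> first_change (scons b x) = Some O.
Proof. intros Hb. apply first_change_eq_Some; simpl; auto. intros [|i] Hi; auto; lia. Qed.

Lemma has_prefix_block b n x : has_prefix (repeat (negb b) (S n) ++ [b]) x = true ->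
  x O = negb b /\ first_change x = Some n.
Proof.
  rewrite has_prefix_nth, length_app, repeat_length. cbn [length]. intros Hm.
  assert (Hi : forall i, (i <= n)%nat -> x i = negb b).
  { intros i Hi. rewrite Hm by lia. rewrite app_nth1 by (rewrite repeat_length; lia).
    apply nth_repeat_lt. lia. }
  assert (Hn : x (S n) = b).
  { rewrite Hm by lia. rewrite app_nth2 by (rewrite repeat_length; lia).
    rewrite repeat_length, Nat.sub_diag. auto. }
  split; [apply Hi; lia|]. apply first_change_eq_Some.
  - rewrite Hn, (Hi O) by lia. destruct b; simpl; congruence.
  - intros i Hii. rewrite !Hi by lia. auto.
Qed.

Lemma cyl_block b n x : cyl (repeat (negb b) (S n) ++ [b]) x <> 0 ->
  x O = negb b /\ first_change x = Some n.
Proof. unfold cyl. destruct (has_prefix _ x) eqn:E; [intros _ | lra]. apply has_prefix_block; auto. Qed.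

Definition level (H0 H1 : nat -> R) (b : bool) : nat -> R := if b then H1 else H0.
Definition level_inf (Hinf0 Hinf1 : R) (b : bool) : R := if b then Hinf1 else Hinf0.

Section Potential.
Variables (H : Sigma -> R) (H0 H1 : nat -> R) (Hinf0 Hinf1 : R).
Hypothesis HR : reduced_double_well H H0 H1.

Lemma H_scons_same b x : x O = b -> H (scons b x) = 0.
Proof. intros Hx. destruct HR as [_ [_ [_ [R _]]]]. apply R. simpl. auto. Qed.

Lemma H_scons_block b x n : x O = negb b -> first_change x = Some n ->
  H (scons b x) = level H0 H1 b (S n).
Proof.
  intros Hx Hf. apply first_change_Some in Hf as [F1 F2].
  destruct HR as [_ [_ [_ [_ [R0 [R1 _]]]]]].
  assert (IB : in_block b (S n) (scons b x)).
  { split; [auto | split].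
    - intros [|i] Hi; [lia|]. simpl. rewrite F2 by lia. auto.
    - simpl. rewrite Hx in F1. destruct (x (S n)), b; simpl in *; congruence. }
  destruct b; simpl; [apply R1 | apply R0]; auto; lia.
Qed.

Lemma level_pos b k : (1 <= k)%nat -> 0 < level H0 H1 b k.
Proof. intros Hk. destruct HR as [_ [_ [_ [_ [_ [_ [A [B _]]]]]]]]. destruct b; simpl; auto. Qed.

Hypotheses (C0 : Un_cv H0 Hinf0) (C1 : Un_cv H1 Hinf1).

Lemma level_cv b : Un_cv (level H0 H1 b) (level_inf Hinf0 Hinf1 b).
Proof. destruct b; auto. Qed.

(* [scons b x] is the limit of the blocks [b (~b)^m b], so continuity of [H] gives the value. *)
Lemma H_scons_constant b x : x O = negb b -> first_change x = None ->
  H (scons b x) = level_inf Hinf0 Hinf1 b.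
Proof.
  intros Hx Hf. pose proof (first_change_None x Hf) as Hc.
  set (L := level_inf Hinf0 Hinf1 b).
  apply NNPP; intros Hne.
  set (e := Rabs (H (scons b x) - L) / 2).
  assert (He : 0 < e) by (apply Rdiv_lt_0_compat; [apply Rabs_pos_lt; lra | lra]).
  destruct (proj1 HR (scons b x) e He) as [N HN].
  destruct (level_cv b e He) as [N2 HN2].
  set (m := max N N2).
  set (y := fun i => if Nat.ltb i (S m) then negb b else b).
  assert (Hy0 : y O = negb b) by reflexivity.
  assert (Hfy : first_change y = Some m).
  { apply first_change_eq_Some.
    - unfold y. rewrite Nat.ltb_irrefl, (proj2 (Nat.ltb_lt _ _)) by lia. destruct b; simpl; congruence.
    - intros i Hi; unfold y. rewrite !(proj2 (Nat.ltb_lt _ _)) by lia; auto. }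
  assert (Ag : agree N (scons b x) (scons b y)).
  { apply (agree_mono (S N)); [lia|]. apply agree_scons. intros i Hi.
    rewrite Hc, Hx. unfold y. rewrite (proj2 (Nat.ltb_lt _ _)) by lia. auto. }
  specialize (HN _ Ag). rewrite (H_scons_block b y m Hy0 Hfy) in HN.
  specialize (HN2 (S m) ltac:(lia)). unfold R_dist in HN2. fold L in HN2.
  pose proof (Rabs_triang (H (scons b x) - level H0 H1 b (S m)) (level H0 H1 b (S m) - L)).
  rewrite Rabs_minus_sym in HN.
  replace (H (scons b x) - level H0 H1 b (S m) + (level H0 H1 b (S m) - L))
    with (H (scons b x) - L) in * by ring.
  unfold e in *. lra.
Qed.

End Potential.

(** * Real numbers and series *)

Lemma exp_le_mono x y : x <= y -> exp x <= exp y.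
Proof. intros [H|H]; [left; apply exp_increasing; auto | subst; lra]. Qed.

Lemma exp_neg_mult_le_1 beta a : 0 <= beta -> 0 <= a -> exp (- beta * a) <= 1.
Proof. intros. rewrite <- exp_0. apply exp_le_mono. nra. Qed.

Lemma inv_pow_pos lam n : 0 < lam -> 0 < / lam ^ n.
Proof. intros. apply Rinv_0_lt_compat, pow_lt; auto. Qed.

Lemma inv_pow_le_1 lam n : 1 <= lam -> / lam ^ n <= 1.
Proof. intros. rewrite <- Rinv_1. apply Rinv_le_contravar; [lra | apply pow_R1_Rle; lra]. Qed.

Lemma inv_lt_1 lam : 1 < lam -> / lam < 1.
Proof. intros. rewrite <- Rinv_1. apply Rinv_lt_contravar; lra. Qed.

Lemma is_series_partial_le u l N : is_series u l -> (forall n, 0 <= u n) -> sum_f_R0 u N <= l.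
Proof. intros Hu Hp. apply is_series_Reals in Hu. apply sum_incr; auto. Qed.

Lemma is_series_ext_R (a b : nat -> R) l : (forall n, a n = b n) -> is_series a l -> is_series b l.
Proof. apply is_series_ext. Qed.

Lemma is_series_scal_R c (a : nat -> R) l : is_series a l -> is_series (fun n => c * a n) (c * l).
Proof. intros Ha. exact (is_series_scal_l c a l Ha). Qed.

Lemma is_series_plus_R (a b : nat -> R) la lb :
  is_series a la -> is_series b lb -> is_series (fun n => a n + b n) (la + lb).
Proof. intros Ha Hb. exact (is_series_plus a b la lb Ha Hb). Qed.

Lemma is_series_minus_R (a b : nat -> R) la lb :
  is_series a la -> is_series b lb -> is_series (fun n => a n - b n) (la - lb).
Proof. intros Ha Hb. exact (is_series_minus a b la lb Ha Hb). Qed.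

Lemma ex_series_le_R (a b : nat -> R) : (forall n, Rabs (a n) <= b n) -> ex_series b -> ex_series a.
Proof. intros. apply (ex_series_le a b); auto. Qed.

Lemma series_eq u l : is_series u l -> series u = l.
Proof.
  intros Hu. apply is_series_Reals in Hu. unfold series. apply (uniqueness_sum u); auto.
  apply epsilon_spec. exists l; auto.
Qed.

Lemma is_series_of_remainder (u : nat -> R) l (r : nat -> R) :
  (forall n, l = sum_f_R0 u n + r n) -> is_lim_seq r 0 -> is_series u l.
Proof.
  intros Hs Hr. apply is_series_Reals, is_lim_seq_Reals.
  apply (is_lim_seq_ext (fun n => l - r n)); [intros n; rewrite (Hs n); ring|].
  replace (Finite l) with (Finite (l - 0)) by (f_equal; ring).
  apply is_lim_seq_minus'; auto. apply is_lim_seq_const.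
Qed.

Lemma is_lim_seq_inv_pow lam : 1 < lam -> is_lim_seq (fun n => / lam ^ n) 0.
Proof.
  intros Hl. apply (is_lim_seq_ext (fun n => (/ lam) ^ n)); [intros; apply pow_inv|].
  apply is_lim_seq_geom. rewrite Rabs_right; [apply inv_lt_1; lra | left; apply Rinv_0_lt_compat; lra].
Qed.

(** * The eigenmeasure on cylinders *)

Section ProbFunctional.
Variable nu : (Sigma -> R) -> R.
Hypothesis P : is_prob_functional nu.

Lemma nu_plus f g : contS f -> contS g -> nu (fun x => f x + g x) = nu f + nu g.
Proof. apply P. Qed.

Lemma nu_scal a f : contS f -> nu (fun x => a * f x) = a * nu f.
Proof. apply P. Qed.

Lemma nu_nonneg f : contS f -> (forall x, 0 <= f x) -> 0 <= nu f.
Proof. apply P. Qed.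

Lemma nu_ext f g : (forall x, f x = g x) -> nu f = nu g.
Proof. intros E. f_equal. apply functional_extensionality; auto. Qed.

Lemma nu_const c : nu (fun _ => c) = c.
Proof.
  rewrite (nu_ext _ (fun _ => c * 1)) by (intros; ring).
  rewrite nu_scal, (proj2 (proj2 (proj2 P))); [ring | apply contS_const].
Qed.

Lemma nu_mono f g : contS f -> contS g -> (forall x, f x <= g x) -> nu f <= nu g.
Proof.
  intros Hf Hg Hle.
  assert (Cd : contS (fun x => g x + -1 * f x))
    by (apply contS_plus; auto; apply contS_mult; auto; apply contS_const).
  assert (E : nu g = nu f + nu (fun x => g x + -1 * f x)).
  { rewrite <- nu_plus; auto. apply nu_ext; intros; ring. }
  assert (0 <= nu (fun x => g x + -1 * f x))
    by (apply nu_nonneg; auto; intros x; specialize (Hle x); lra).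
  lra.
Qed.

Definition ncyl w := nu (cyl w).

Lemma ncyl_nonneg w : 0 <= ncyl w.
Proof. apply nu_nonneg; [apply contS_cyl|]. intros x; destruct (cyl_0_1 w x) as [E|E]; lra. Qed.

Lemma ncyl_app w b : ncyl w = ncyl (w ++ [b]) + ncyl (w ++ [negb b]).
Proof. unfold ncyl. rewrite <- nu_plus by apply contS_cyl. apply nu_ext. intros x. apply cyl_app. Qed.

Lemma ncyl_nil : ncyl [] = 1.
Proof. transitivity (nu (fun _ => 1)); [apply nu_ext; reflexivity | apply nu_const]. Qed.

Lemma ncyl_single_le_1 b : ncyl [b] <= 1.
Proof. rewrite <- ncyl_nil, (ncyl_app [] b). pose proof (ncyl_nonneg [negb b]). simpl in *. lra. Qed.

End ProbFunctional.

Lemma Lop_cyl H beta g b w :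
  Lop H beta (fun y => g y * cyl (b :: w) y) =
  (fun x => exp (- beta * H (scons b x)) * g (scons b x) * cyl w x).
Proof.
  apply functional_extensionality; intros x. unfold Lop. rewrite !cyl_scons.
  destruct b; simpl; ring.
Qed.

Lemma contS_Lop H beta f : contS H -> contS f -> contS (Lop H beta f).
Proof.
  intros Hc Hf. unfold Lop.
  apply contS_plus; apply contS_mult; try apply contS_scons; auto;
    apply (contS_exp (fun x => - beta * H (scons _ x))), contS_mult;
    [apply contS_const | apply contS_scons; auto | apply contS_const | apply contS_scons; auto].
Qed.

Lemma H_bounded H H0 H1 : reduced_double_well H H0 H1 -> exists M, forall x, 0 <= H x <= M.
Proof.
  intros R. destruct R as [Hc [Hp _]]. destruct (contS_max H Hc) as [x Hx].
  exists (H x). auto.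
Qed.

Section EigenMeasure.
Variables (H : Sigma -> R) (H0 H1 : nat -> R) (beta lam : R) (nu : (Sigma -> R) -> R).
Hypotheses (HR : reduced_double_well H H0 H1) (Hbeta : 0 < beta)
  (Hnu : is_eigenmeasure H beta lam nu).

Let P : is_prob_functional nu := proj1 Hnu.
Let HcH : contS H := proj1 HR.

Lemma contS_expH b : contS (fun x => exp (- beta * H (scons b x))).
Proof.
  apply (contS_exp (fun x => - beta * H (scons b x))), contS_mult;
    [apply contS_const | apply contS_scons, HcH].
Qed.

Lemma nu_Lop_cyl b w :
  nu (fun x => exp (- beta * H (scons b x)) * cyl w x) = lam * ncyl nu (b :: w).
Proof.
  unfold ncyl. rewrite (nu_ext nu (cyl (b :: w)) (fun y => 1 * cyl (b :: w) y)) by (intros; ring).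
  rewrite <- (proj2 Hnu) by (apply contS_mult; [apply contS_const | apply contS_cyl]).
  rewrite Lop_cyl. apply nu_ext. intros. ring.
Qed.

(* Since [H > 0] is bounded and vanishes on one of the two preimages, [L 1 >= 1 + e^{-beta max H}]. *)
Lemma eigenvalue_gt_1 : 1 < lam.
Proof.
  destruct (H_bounded _ _ _ HR) as [M HM].
  assert (L : lam = nu (Lop H beta (fun _ => 1))).
  { rewrite (proj2 Hnu) by apply contS_const. rewrite nu_const by auto. ring. }
  assert (G : nu (fun _ => 1 + exp (- beta * M)) <= nu (Lop H beta (fun _ => 1))).
  { apply nu_mono; auto; [apply contS_const | apply contS_Lop; [apply HcH | apply contS_const]|].
    intros x. unfold Lop.
    assert (Hge : forall y, exp (- beta * M) <= exp (- beta * H y))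
      by (intros y; destruct (HM y); apply exp_le_mono; nra).
    pose proof (Hge (scons false x)). pose proof (Hge (scons true x)).
    destruct (x O) eqn:Ex;
      [rewrite (H_scons_same _ _ _ HR true x Ex) | rewrite (H_scons_same _ _ _ HR false x Ex)];
      rewrite Rmult_0_r, exp_0; lra. }
  rewrite nu_const in G by auto. pose proof (exp_pos (- beta * M)). lra.
Qed.

Lemma ncyl_cons_same b w : ncyl nu (b :: b :: w) * lam = ncyl nu (b :: w).
Proof.
  rewrite Rmult_comm, <- nu_Lop_cyl. apply nu_ext. intros x.
  destruct (Req_dec (cyl (b :: w) x) 0) as [Z|Z]; [rewrite Z; ring|].
  rewrite (H_scons_same _ _ _ HR b x (cyl_head _ _ _ Z)), Rmult_0_r, exp_0. ring.
Qed.

Lemma ncyl_cons_block b n :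
  ncyl nu (b :: (repeat (negb b) (S n) ++ [b])) * lam =
  exp (- beta * level H0 H1 b (S n)) * ncyl nu (repeat (negb b) (S n) ++ [b]).
Proof.
  rewrite Rmult_comm, <- nu_Lop_cyl. unfold ncyl. rewrite <- nu_scal by (auto; apply contS_cyl).
  apply nu_ext. intros x.
  destruct (Req_dec (cyl (repeat (negb b) (S n) ++ [b]) x) 0) as [Z|Z]; [rewrite Z; ring|].
  destruct (cyl_block _ _ _ Z) as [X F]. rewrite (H_scons_block _ _ _ HR b x n X F). ring.
Qed.

Lemma ncyl_cons_le b w : ncyl nu (b :: w) * lam <= ncyl nu w.
Proof.
  rewrite Rmult_comm, <- nu_Lop_cyl. apply nu_mono; auto;
    [apply contS_mult; [apply contS_expH | apply contS_cyl] | apply contS_cyl|].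
  intros x. pose proof (exp_neg_mult_le_1 beta (H (scons b x)) ltac:(lra) (proj1 (proj2 HR) _)).
  pose proof (exp_pos (- beta * H (scons b x))).
  destruct (cyl_0_1 w x) as [Z|Z]; rewrite Z; nra.
Qed.

Lemma ncyl_repeat c w n : ncyl nu (repeat c (S n) ++ w) * lam ^ n = ncyl nu (c :: w).
Proof.
  induction n; [simpl; ring|].
  change (repeat c (S (S n)) ++ w) with (c :: c :: (repeat c n ++ w)).
  rewrite <- IHn. change (repeat c (S n) ++ w) with (c :: (repeat c n ++ w)).
  rewrite <- (ncyl_cons_same c (repeat c n ++ w)). simpl. ring.
Qed.

Lemma ncyl_repeat_le c n : ncyl nu (repeat c (S n)) <= / lam ^ n.
Proof.
  pose proof eigenvalue_gt_1. pose proof (pow_lt lam n ltac:(lra)).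
  pose proof (ncyl_repeat c [] n) as E. rewrite app_nil_r in E.
  pose proof (ncyl_single_le_1 nu P c).
  apply Rmult_le_reg_r with (lam ^ n); auto. rewrite E, Rinv_l; lra.
Qed.

(* Splitting [b (~b)] by the length of the block of [~b]: the k-th piece is
   [lam^{-k-1} e^{-beta H_{k+1}^b} nu[(~b) b]]. *)
Lemma ncyl_change_series b :
  is_series (fun k => / lam ^ S k * exp (- beta * level H0 H1 b (S k)) * ncyl nu [negb b; b])
            (ncyl nu [b; negb b]).
Proof.
  pose proof eigenvalue_gt_1 as Hl.
  set (t := fun k => ncyl nu (b :: (repeat (negb b) (S k) ++ [b]))).
  set (r := fun M => ncyl nu (b :: repeat (negb b) (S (S M)))).
  assert (Ht : forall k, t k = / lam ^ S k * exp (- beta * level H0 H1 b (S k)) * ncyl nu [negb b; b]).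
  { intros k. unfold t. rewrite <- (ncyl_repeat (negb b) [b] k).
    apply Rmult_eq_reg_r with lam; [|lra]. rewrite ncyl_cons_block. simpl.
    assert (lam ^ k <> 0) by (apply pow_nonzero; lra). field. lra. }
  apply (is_series_ext_R t); [exact Ht|]. apply (is_series_of_remainder _ _ r).
  - induction n.
    + apply (ncyl_app nu P [b; negb b] b).
    + rewrite tech5, IHn. unfold r at 1. rewrite (ncyl_app nu P _ b).
      unfold t, r. simpl. rewrite <- repeat_cons. simpl. ring.
  - apply (is_lim_seq_le_le (fun _ => 0) _ (fun n => / lam ^ n));
      [|apply is_lim_seq_const | apply is_lim_seq_inv_pow; auto].
    intros n. split; [apply ncyl_nonneg; auto|].
    pose proof (ncyl_cons_le b (repeat (negb b) (S (S n)))). pose proof (ncyl_repeat_le (negb b) (S n)).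
    pose proof (ncyl_nonneg nu P (b :: repeat (negb b) (S (S n)))).
    assert (/ lam ^ S n <= / lam ^ n).
    { apply Rinv_le_contravar; [apply pow_lt; lra|]. simpl. pose proof (pow_lt lam n ltac:(lra)). nra. }
    unfold r. nra.
Qed.

Lemma ncyl_change b : ncyl nu [b; negb b] * lam = ncyl nu [b] * (lam - 1).
Proof.
  pose proof (ncyl_app nu P [b] b) as E. pose proof (ncyl_cons_same b []) as E2. simpl in *. nra.
Qed.

Lemma ncyl_change_pos b : 0 < ncyl nu [b; negb b].
Proof.
  pose proof eigenvalue_gt_1 as Hl.
  assert (Tr : forall c, 0 < ncyl nu [c; negb c] -> 0 < ncyl nu [negb c; c]).
  { intros c Hc. pose proof (ncyl_change_series (negb c)) as Sm. rewrite negb_involutive in Sm.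
    eapply Rlt_le_trans; [|apply (is_series_partial_le _ _ O Sm)].
    - simpl. apply Rmult_lt_0_compat; auto.
      apply Rmult_lt_0_compat; [apply Rinv_0_lt_compat; lra | apply exp_pos].
    - intros n. apply Rmult_le_pos;
        [apply Rmult_le_pos; [left; apply inv_pow_pos; lra | left; apply exp_pos]
                                    | apply ncyl_nonneg; auto]. }
  (* [nu[c (~c)] lam = nu[c] (lam - 1)] is positive for a [c] with [nu[c] > 0]. *)
  assert (Some : exists c, 0 < ncyl nu [c; negb c]).
  { pose proof (ncyl_app nu P [] false) as E. rewrite ncyl_nil in E by auto. simpl in E.
    destruct (Rlt_or_le 0 (ncyl nu [false])) as [C|C]; [exists false | exists true];
      pose proof (ncyl_change false); pose proof (ncyl_change true);
      pose proof (ncyl_nonneg nu P [true]); simpl in *; nra. }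
  destruct Some as [c Hc]. destruct (Bool.bool_dec b c) as [->|D]; auto.
  replace b with (negb c) by (destruct b, c; simpl in *; congruence).
  rewrite negb_involutive. apply Tr; auto.
Qed.

Lemma Fb_level_eq b : Fb (level H0 H1 b) beta lam = ncyl nu [b; negb b] / ncyl nu [negb b; b].
Proof.
  pose proof (ncyl_change_pos (negb b)) as Pn. rewrite negb_involutive in Pn.
  unfold Fb. apply series_eq.
  apply (is_series_ext_R (fun k => / ncyl nu [negb b; b] *
     (/ lam ^ S k * exp (- beta * level H0 H1 b (S k)) * ncyl nu [negb b; b]))).
  - intros n. pose proof eigenvalue_gt_1. field. split; [apply pow_nonzero |]; lra.
  - unfold Rdiv. rewrite Rmult_comm. apply is_series_scal_R, ncyl_change_series.
Qed.

Lemma Fb_level_pos b : 0 < Fb (level H0 H1 b) beta lam.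
Proof.
  rewrite Fb_level_eq. pose proof (ncyl_change_pos b). pose proof (ncyl_change_pos (negb b)).
  rewrite negb_involutive in *. apply Rdiv_lt_0_compat; auto.
Qed.

Lemma Fb_product : Fb H0 beta lam * Fb H1 beta lam = 1.
Proof.
  change H0 with (level H0 H1 false). change H1 with (level H0 H1 true) at 2.
  rewrite !Fb_level_eq. pose proof (ncyl_change_pos false). pose proof (ncyl_change_pos true).
  simpl in *. field. lra.
Qed.

End EigenMeasure.

(** * Tail series *)

Lemma is_series_inv_pow_S lam : 1 < lam -> is_series (fun j => / lam ^ S j) (/ (lam - 1)).
Proof.
  intros Hl. assert (Hq : Rabs (/ lam) < 1).
  { rewrite Rabs_right; [apply inv_lt_1; lra | left; apply Rinv_0_lt_compat; lra]. }
  replace (/ (lam - 1)) with (/ lam * / (1 - / lam)) by (field; lra).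
  apply (is_series_ext_R (fun j => / lam * (/ lam) ^ j)).
  - intros n. rewrite pow_inv. simpl. field. split; [apply pow_nonzero|]; lra.
  - apply is_series_scal_R, is_series_geom, Hq.
Qed.

Lemma Series_nonneg (a : nat -> R) : (forall n, 0 <= a n) -> ex_series a -> 0 <= Series a.
Proof.
  intros Hp He. replace 0 with (Series (fun n => 0 * a n)) by (rewrite Series_scal_l; ring).
  apply Series_le; auto. intros n; rewrite Rmult_0_l; split; [lra | auto].
Qed.

Lemma Series_abs_le (a D : nat -> R) (Dl : R) :
  (forall n, Rabs (a n) <= D n) -> is_series D Dl -> Rabs (Series a) <= Dl.
Proof.
  intros Hb HD.
  assert (E1 : ex_series (fun n => Rabs (a n))).
  { apply (ex_series_le_R _ D); [intros n; rewrite Rabs_Rabsolu; auto | exists Dl; auto]. }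
  eapply Rle_trans; [apply Series_Rabs; auto|].
  rewrite <- (is_series_unique _ _ HD). apply Series_le; [|exists Dl; auto].
  intros n; split; [apply Rabs_pos | auto].
Qed.

Lemma exp_neg_mult_lipschitz beta a b m : 0 <= beta -> m <= a -> m <= b ->
  Rabs (exp (- beta * a) - exp (- beta * b)) <= beta * Rabs (a - b) * exp (- beta * m).
Proof.
  intros Hb Ha Hbm.
  assert (K : forall a b, m <= a -> a <= b ->
            Rabs (exp (- beta * a) - exp (- beta * b)) <= beta * (b - a) * exp (- beta * m)).
  { clear a b Ha Hbm. intros a b Ha Hab.
    replace (exp (- beta * b)) with (exp (- beta * a) * exp (- (beta * (b - a))))
      by (rewrite <- exp_plus; f_equal; ring).
    pose proof (exp_ineq1_le (- (beta * (b - a)))).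
    assert (exp (- (beta * (b - a))) <= 1) by (rewrite <- exp_0; apply exp_le_mono; nra).
    assert (exp (- beta * a) <= exp (- beta * m)) by (apply exp_le_mono; nra).
    pose proof (exp_pos (- beta * a)).
    rewrite Rabs_right by nra.
    apply Rle_trans with (exp (- beta * a) * (beta * (b - a))); [nra|].
    rewrite (Rmult_comm (beta * (b - a))). apply Rmult_le_compat_r; nra. }
  destruct (Rle_or_lt a b) as [L|L].
  - rewrite (Rabs_left1 (a - b)) by lra. replace (- (a - b)) with (b - a) by ring. auto.
  - rewrite Rabs_minus_sym, (Rabs_right (a - b)) by lra. apply K; lra.
Qed.

Lemma n_inv_pow_le lam n : 1 < lam -> INR n * / lam ^ n <= / (lam - 1).
Proof.
  intros Hl. pose proof (Rle_pow_lin (lam - 1) n ltac:(lra)) as B.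
  replace (1 + (lam - 1)) with lam in B by ring.
  pose proof (pow_lt lam n ltac:(lra)).
  apply Rmult_le_reg_r with (lam ^ n); auto. rewrite Rmult_assoc, Rinv_l, Rmult_1_r by lra.
  apply Rmult_le_reg_l with (lam - 1); [lra|]. rewrite <- Rmult_assoc, Rinv_r, Rmult_1_l by lra. lra.
Qed.

(* With [mu = sqrt lam]: [n / lam^n = (n / mu^n) / mu^n <= / ((mu - 1) mu^n)]. *)
Lemma is_lim_seq_n_inv_pow lam : 1 < lam -> is_lim_seq (fun n => INR n * / lam ^ n) 0.
Proof.
  intros Hl. set (mu := sqrt lam).
  assert (Hmu : 1 < mu) by (unfold mu; rewrite <- sqrt_1; apply sqrt_lt_1; lra).
  assert (Hsq : forall n, lam ^ n = mu ^ n * mu ^ n).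
  { intros n. rewrite <- Rpow_mult_distr. unfold mu. rewrite sqrt_sqrt; lra. }
  apply (is_lim_seq_le_le (fun _ => 0) _ (fun n => / (mu - 1) * / mu ^ n)).
  - intros n. pose proof (n_inv_pow_le mu n Hmu). pose proof (pos_INR n).
    pose proof (inv_pow_pos mu n ltac:(lra)).
    rewrite Hsq, Rinv_mult, <- Rmult_assoc. split; [nra|].
    apply Rmult_le_compat_r; lra.
  - apply is_lim_seq_const.
  - replace (Finite 0) with (Rbar_mult (/ (mu - 1)) 0) by (simpl; f_equal; ring).
    apply is_lim_seq_scal_l, is_lim_seq_inv_pow, Hmu.
Qed.

Definition nonneg_levels (h : nat -> R) := forall k, (1 <= k)%nat -> 0 <= h k.

Lemma limit_nonneg (h : nat -> R) L : nonneg_levels h -> Un_cv h L -> 0 <= L.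
Proof.
  intros Hh C. apply Rnot_lt_le; intros HL. destruct (C (- L)) as [N HN]; [lra|].
  specialize (HN (S N) ltac:(lia)). specialize (Hh (S N) ltac:(lia)). unfold R_dist in HN.
  apply Rabs_def2 in HN. lra.
Qed.

Definition Ftail (h : nat -> R) beta lam n :=
  Series (fun j => / lam ^ S j * exp (- beta * h (S (n + j)))).

Section TailSeries.
Variables (h : nat -> R) (beta lam : R).
Hypotheses (Hh : nonneg_levels h) (Hb : 0 <= beta) (Hl : 1 < lam).

Lemma Ftail_term_bound n j :
  0 < / lam ^ S j * exp (- beta * h (S (n + j))) <= / lam ^ S j.
Proof.
  pose proof (inv_pow_pos lam (S j) ltac:(lra)).
  pose proof (exp_neg_mult_le_1 beta (h (S (n + j))) Hb (Hh (S (n + j)) ltac:(lia))).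
  pose proof (exp_pos (- beta * h (S (n + j)))).
  split; [apply Rmult_lt_0_compat; auto | nra].
Qed.

Lemma is_series_Ftail n :
  is_series (fun j => / lam ^ S j * exp (- beta * h (S (n + j)))) (Ftail h beta lam n).
Proof.
  apply Series_correct, (ex_series_le_R _ (fun j => / lam ^ S j));
    [|eexists; apply is_series_inv_pow_S, Hl].
  intros j. destruct (Ftail_term_bound n j). rewrite Rabs_right; lra.
Qed.

Lemma Ftail_0 : Ftail h beta lam 0 = Fb h beta lam.
Proof. symmetry. apply series_eq, is_series_Ftail. Qed.

Lemma Ftail_rec n : lam * Ftail h beta lam n = exp (- beta * h (S n)) + Ftail h beta lam (S n).
Proof.
  set (a := fun k => lam * (/ lam ^ S k * exp (- beta * h (S (n + k))))).
  assert (S1 : is_series a (plus (lam * Ftail h beta lam n - a O) (a O))).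
  { replace (plus _ _) with (lam * Ftail h beta lam n) by (unfold plus; simpl; ring).
    apply is_series_scal_R, is_series_Ftail. }
  apply (@is_series_incr_1 R_AbsRing R_NormedModule), is_series_unique in S1.
  replace (Ftail h beta lam (S n)) with (Series (fun k => a (S k))).
  - rewrite S1. unfold a. simpl. rewrite Nat.add_0_r. field. lra.
  - apply Series_ext. intros k. unfold a. rewrite Nat.add_succ_r. simpl.
    field. split; [apply pow_nonzero|]; lra.
Qed.

Lemma Ftail_pos n : 0 < Ftail h beta lam n.
Proof.
  pose proof (Ftail_rec n) as E.
  assert (0 <= Ftail h beta lam (S n)).
  { apply Series_nonneg; [|eexists; apply is_series_Ftail].
    intros j. destruct (Ftail_term_bound (S n) j). lra. }
  pose proof (exp_pos (- beta * h (S n))).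
  apply Rmult_lt_reg_l with lam; lra.
Qed.

Lemma Ftail_le n : Ftail h beta lam n <= / (lam - 1).
Proof.
  unfold Ftail. rewrite <- (is_series_unique _ _ (is_series_inv_pow_S lam Hl)).
  apply Series_le; [|eexists; apply is_series_inv_pow_S, Hl].
  intros j. destruct (Ftail_term_bound n j). lra.
Qed.

Lemma Ftail_cv L : Un_cv h L -> Un_cv (Ftail h beta lam) (exp (- beta * L) / (lam - 1)).
Proof.
  intros Hc e He. pose proof (limit_nonneg h L Hh Hc) as L0.
  set (e' := e * (lam - 1) / (2 * (beta + 1))).
  assert (He' : 0 < e') by (apply Rdiv_lt_0_compat; nra).
  destruct (Hc e' He') as [N HN]. exists N. intros n Hn. unfold R_dist.
  set (d := fun j => / lam ^ S j * exp (- beta * h (S (n + j))) - / lam ^ S j * exp (- beta * L)).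
  assert (Hd : forall j, Rabs (d j) <= / lam ^ S j * (beta * e')).
  { intros j. unfold d. rewrite <- Rmult_minus_distr_l, Rabs_mult.
    pose proof (inv_pow_pos lam (S j) ltac:(lra)).
    rewrite Rabs_right by lra. apply Rmult_le_compat_l; [lra|].
    eapply Rle_trans; [apply (exp_neg_mult_lipschitz beta _ _ 0); auto; apply Hh; lia|].
    rewrite Rmult_0_r, exp_0, Rmult_1_r. apply Rmult_le_compat_l; auto.
    specialize (HN (S (n + j)) ltac:(lia)). unfold R_dist in HN. lra. }
  assert (Ser : is_series d (Ftail h beta lam n - exp (- beta * L) / (lam - 1))).
  { apply (is_series_minus_R _ _ _ _ (is_series_Ftail n)).
    apply (is_series_ext_R (fun j => exp (- beta * L) * / lam ^ S j)); [intros; ring|].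
    apply is_series_scal_R, is_series_inv_pow_S, Hl. }
  assert (B : Rabs (Series d) <= / (lam - 1) * (beta * e')).
  { apply (Series_abs_le _ _ _ Hd).
    replace (/ (lam - 1) * (beta * e')) with (beta * e' * / (lam - 1)) by ring.
    apply (is_series_ext_R (fun j => beta * e' * / lam ^ S j)); [intros; ring|].
    apply is_series_scal_R, is_series_inv_pow_S, Hl. }
  rewrite (is_series_unique _ _ Ser) in B. eapply Rle_lt_trans; [exact B|].
  unfold e'. replace (/ (lam - 1) * (beta * (e * (lam - 1) / (2 * (beta + 1)))))
    with (e * (beta / (2 * (beta + 1)))) by (field; lra).
  assert (beta / (2 * (beta + 1)) < 1).
  { apply Rmult_lt_reg_r with (2 * (beta + 1)); [lra|].
    unfold Rdiv. rewrite Rmult_assoc, Rinv_l by lra. lra. }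
  nra.
Qed.

(* Abel summation: [sum_n lam^{-n} Ftail n = sum_k k lam^{-k} e^{-beta h_k}]. *)
Lemma is_series_Ftb_tails :
  ex_series (fun n => Ftail h beta lam n / lam ^ n) ->
  is_series (fun k => INR (S k) * / lam ^ S k * exp (- beta * h (S k)))
            (Series (fun n => Ftail h beta lam n / lam ^ n)).
Proof.
  intros Hs. set (Sv := Series _).
  set (a := fun k => / lam ^ S k * exp (- beta * h (S k))).
  set (T := fun n => Ftail h beta lam n / lam ^ n).
  assert (Trec : forall n, T n = a n + T (S n)).
  { intros n. unfold T, a. pose proof (Ftail_rec n) as E.
    assert (lam ^ n <> 0) by (apply pow_nonzero; lra).
    apply Rmult_eq_reg_l with (lam ^ S n); [|apply pow_nonzero; lra]. simpl.
    replace (lam * lam ^ n * (Ftail h beta lam n / lam ^ n)) with (lam * Ftail h beta lam n)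
      by (field; auto).
    rewrite E. field. split; auto; lra. }
  assert (Part : forall N, sum_f_R0 T N = sum_f_R0 (fun k => INR (S k) * a k) N + INR (S N) * T (S N)).
  { induction N; [simpl; rewrite (Trec O); ring|].
    rewrite !tech5, IHN, (Trec (S N)), !S_INR. ring. }
  assert (Tb : forall n, 0 <= INR n * T n <= INR n * / lam ^ n * / (lam - 1)).
  { intros n. unfold T. pose proof (inv_pow_pos lam n ltac:(lra)). pose proof (pos_INR n).
    pose proof (Ftail_pos n). pose proof (Ftail_le n).
    replace (INR n * (Ftail h beta lam n / lam ^ n)) with (INR n * / lam ^ n * Ftail h beta lam n)
      by (unfold Rdiv; ring).
    split; [apply Rmult_le_pos; [apply Rmult_le_pos|]; lra | apply Rmult_le_compat_l; nra]. }
  apply (is_series_ext_R (fun k => INR (S k) * a k)); [intros; unfold a; ring|].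
  apply (is_series_of_remainder _ _ (fun N => (Sv - sum_f_R0 T N) + INR (S N) * T (S N))).
  - intros N. rewrite Part. ring.
  - replace (Finite 0) with (Finite (0 + 0)) by (f_equal; ring).
    apply is_lim_seq_plus'.
    + apply Series_correct, is_series_Reals, is_lim_seq_Reals in Hs.
      apply (is_lim_seq_minus' (fun _ => Sv) _ Sv) in Hs; [|apply is_lim_seq_const].
      rewrite Rminus_diag in Hs. exact Hs.
    + apply (is_lim_seq_incr_1 (fun n => INR n * T n)).
      apply (is_lim_seq_le_le (fun _ => 0) _ (fun n => INR n * / lam ^ n * / (lam - 1))); auto.
      * apply is_lim_seq_const.
      * replace (Finite 0) with (Rbar_mult 0 (/ (lam - 1))) by (simpl; f_equal; ring).
        apply is_lim_seq_scal_r, is_lim_seq_n_inv_pow, Hl.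
Qed.

End TailSeries.

(* The case [h = 0], [beta = 0] of the Abel summation. *)
Lemma is_series_n_inv_pow lam :
  1 < lam -> is_series (fun k => INR (S k) * / lam ^ S k) (lam / (lam - 1) ^ 2).
Proof.
  intros Hl. assert (Hh : nonneg_levels (fun _ => 0)) by (intros k _; lra).
  assert (E0 : exp (- 0 * 0) = 1) by (rewrite Rmult_0_r, exp_0; auto).
  assert (Av : forall n, Ftail (fun _ => 0) 0 lam n = / (lam - 1)).
  { intros n. unfold Ftail. rewrite <- (is_series_unique _ _ (is_series_inv_pow_S lam Hl)).
    apply Series_ext. intros j. rewrite E0; ring. }
  assert (G : is_series (fun n => Ftail (fun _ => 0) 0 lam n / lam ^ n) (lam / (lam - 1) ^ 2)).
  { assert (Hq : Rabs (/ lam) < 1)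
      by (rewrite Rabs_right; [apply inv_lt_1; lra | left; apply Rinv_0_lt_compat; lra]).
    apply (is_series_ext_R (fun n => / (lam - 1) * (/ lam) ^ n)).
    - intros n. rewrite Av, pow_inv. unfold Rdiv. ring.
    - replace (lam / (lam - 1) ^ 2) with (/ (lam - 1) * / (1 - / lam)) by (field; lra).
      apply is_series_scal_R, is_series_geom, Hq. }
  pose proof (is_series_Ftb_tails (fun _ => 0) 0 lam Hh (Rle_refl 0) Hl (ex_intro _ _ G)) as T.
  rewrite (is_series_unique _ _ G) in T.
  eapply is_series_ext_R; [|exact T]. intros k. cbv beta. rewrite E0. ring.
Qed.

Lemma is_series_Ftb h beta lam : nonneg_levels h -> 0 <= beta -> 1 < lam ->
  is_series (fun k => INR (S k) * / lam ^ S k * exp (- beta * h (S k))) (Ftb h beta lam).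
Proof.
  intros Hh Hb Hl.
  assert (Ex : ex_series (fun k => INR (S k) * / lam ^ S k * exp (- beta * h (S k)))).
  { apply (ex_series_le_R _ (fun k => INR (S k) * / lam ^ S k));
      [|eexists; apply is_series_n_inv_pow, Hl].
    intros k. pose proof (inv_pow_pos lam (S k) ltac:(lra)). pose proof (pos_INR (S k)).
    pose proof (exp_pos (- beta * h (S k))).
    pose proof (exp_neg_mult_le_1 beta _ Hb (Hh (S k) ltac:(lia))).
    rewrite Rabs_right; [|apply Rle_ge, Rmult_le_pos; [apply Rmult_le_pos|]; lra].
    rewrite <- (Rmult_1_r (INR (S k) * / lam ^ S k)) at 2. apply Rmult_le_compat_l; [nra | lra]. }
  unfold Ftb. rewrite (series_eq _ _ (Series_correct _ Ex)). apply Series_correct, Ex.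
Qed.

(** * The eigenfunction *)

Lemma Lop_eq H beta f x b : Lop H beta f x =
  exp (- beta * H (scons b x)) * f (scons b x) + exp (- beta * H (scons (negb b) x)) * f (scons
      (negb b) x).
Proof. unfold Lop. destruct b; simpl; ring. Qed.

Definition prepend (y : Sigma) (N : nat) (z : Sigma) : Sigma :=
  fun i => if Nat.ltb i N then y i else z (i - N)%nat.

Lemma prepend_S y N z : prepend y (S N) z = scons (y O) (prepend (shift y) N z).
Proof. apply functional_extensionality; intros [|i]; unfold prepend; simpl; auto. Qed.

Lemma agree_prepend y N z : agree N y (prepend y N z).
Proof. intros i Hi. unfold prepend. rewrite (proj2 (Nat.ltb_lt _ _)) by auto. auto. Qed.

(* The eigen-equation propagates a zero of [h >= 0] to all its preimages, which are dense. *)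
Lemma eigenfunction_zero H beta lam (h : Sigma -> R) : contS h -> (forall x, 0 <= h x) ->
  (forall x, Lop H beta h x = lam * h x) -> (exists x0, h x0 = 0) -> forall x, h x = 0.
Proof.
  intros Ch Hpos Eh [x0 Hz].
  assert (Back : forall x c, h x = 0 -> h (scons c x) = 0).
  { intros x c Hx. pose proof (Eh x) as E. rewrite (Lop_eq H beta h x c), Hx, Rmult_0_r in E.
    pose proof (exp_pos (- beta * H (scons c x))). pose proof (exp_pos (- beta * H (scons (negb c) x))).
    pose proof (Hpos (scons c x)). pose proof (Hpos (scons (negb c) x)).
    assert (Q : exp (- beta * H (scons c x)) * h (scons c x) = 0) by nra.
    apply Rmult_integral in Q. destruct Q; lra. }
  assert (Dense : forall N y, h (prepend y N x0) = 0).
  { induction N; intros y.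
    - replace (prepend y 0 x0) with x0; auto. apply functional_extensionality; intros i.
      unfold prepend. simpl. f_equal; lia.
    - rewrite prepend_S. apply Back, IHN. }
  intros x. apply NNPP. intros Hne.
  assert (Hx : 0 < h x) by (destruct (Hpos x); auto; lra).
  destruct (Ch x (h x) Hx) as [N HN].
  specialize (HN (prepend x N x0) (agree_prepend x N x0)). rewrite Dense in HN.
  rewrite Rabs_left in HN by lra. lra.
Qed.

Lemma eigenfunction_unique H beta lam (Phi Psi : Sigma -> R) : contS Phi -> contS Psi ->
  (forall x, 0 < Phi x) -> (forall x, 0 < Psi x) ->
  (forall x, Lop H beta Phi x = lam * Phi x) -> (forall x, Lop H beta Psi x = lam * Psi x) ->
  exists t, 0 < t /\ forall x, Phi x = t * Psi x.
Proof.
  intros Cf Cp Pf Pp Ef Ep.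
  destruct (contS_min (fun x => Phi x * / Psi x)) as [xs Hxs].
  { apply contS_mult, contS_inv; auto. intros x; specialize (Pp x); lra. }
  set (t := Phi xs * / Psi xs).
  assert (Ht : 0 < t) by (apply Rmult_lt_0_compat; [auto | apply Rinv_0_lt_compat; auto]).
  exists t. split; auto. intros x.
  enough (Z : forall x, Phi x + - t * Psi x = 0) by (specialize (Z x); lra).
  apply (eigenfunction_zero H beta lam).
  - apply contS_plus; auto. apply contS_mult; auto. apply contS_const.
  - intros y. specialize (Hxs y). fold t in Hxs. specialize (Pp y).
    apply Rmult_le_compat_r with (r := Psi y) in Hxs; [|lra].
    rewrite Rmult_assoc, Rinv_l, Rmult_1_r in Hxs by lra. lra.
  - intros y. transitivity (Lop H beta Phi y + - t * Lop H beta Psi y); [unfold Lop; ring|].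
    rewrite Ef, Ep. ring.
  - exists xs. unfold t. field. specialize (Pp xs). lra.
Qed.

Section ExplicitEigenfunction.
Variables (H : Sigma -> R) (H0 H1 : nat -> R) (Hinf0 Hinf1 beta lam : R) (nu : (Sigma -> R) -> R).
Hypotheses (HR : reduced_double_well H H0 H1) (C0 : Un_cv H0 Hinf0) (C1 : Un_cv H1 Hinf1)
  (Hbeta : 0 < beta) (Hnu : is_eigenmeasure H beta lam nu).

Let Hl : 1 < lam := eigenvalue_gt_1 H H0 H1 beta lam nu HR Hbeta Hnu.
Let P : is_prob_functional nu := proj1 Hnu.

Lemma nonneg_level b : nonneg_levels (level H0 H1 b).
Proof. intros k Hk. left. apply (level_pos H); auto. Qed.

Definition psi_weight (b : bool) := if b then 1 else Fb H0 beta lam.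

(** On [b (~b)^{n+1} b ...] the eigenfunction is [psi_weight b * Ftail (level (~b)) n]; the
    weights are forced by [psi (~b b ...) = psi_weight b * F^b(lam)]. *)
Definition psi (x : Sigma) : R :=
  match first_change x with
  | Some n => psi_weight (x O) * Ftail (level H0 H1 (negb (x O))) beta lam n
  | None => psi_weight (x O) * (exp (- beta * level_inf Hinf0 Hinf1 (negb (x O))) / (lam - 1))
  end.

Lemma psi_weight_pos b : 0 < psi_weight b.
Proof. destruct b; simpl; [lra | apply (Fb_level_pos H H0 H1 beta lam nu HR Hbeta Hnu false)]. Qed.

Lemma psi_weight_rel b : psi_weight b = psi_weight (negb b) * Fb (level H0 H1 b) beta lam.
Proof. destruct b; simpl; [rewrite (Fb_product H H0 H1 beta lam nu) | ring]; auto. Qed.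

Lemma Lop_psi x : Lop H beta psi x = lam * psi x.
Proof.
  set (b := x O). rewrite (Lop_eq H beta _ x b).
  assert (X1 : psi (scons (negb b) x) = psi_weight b).
  { unfold psi. rewrite first_change_scons_diff by (unfold b; destruct (x O); simpl; congruence).
    simpl. rewrite negb_involutive, Ftail_0; [|apply nonneg_level | lra | exact Hl].
    symmetry. apply psi_weight_rel. }
  rewrite X1, (H_scons_same H H0 H1 HR b x eq_refl), Rmult_0_r, exp_0, Rmult_1_l.
  unfold psi. rewrite (first_change_scons_same b x eq_refl). simpl. fold b.
  assert (Hx : x O = negb (negb b)) by (rewrite negb_involutive; auto).
  destruct (first_change x) as [n|] eqn:F; simpl.
  - rewrite (H_scons_block H H0 H1 HR (negb b) x n Hx F).
    replace (lam * (psi_weight b * Ftail (level H0 H1 (negb b)) beta lam n))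
      with (psi_weight b * (lam * Ftail (level H0 H1 (negb b)) beta lam n)) by ring.
    rewrite (Ftail_rec _ beta lam (nonneg_level _) ltac:(lra) Hl n). ring.
  - rewrite (H_scons_constant H H0 H1 Hinf0 Hinf1 HR C0 C1 (negb b) x Hx F). field. lra.
Qed.

Lemma psi_pos x : 0 < psi x.
Proof.
  pose proof (psi_weight_pos (x O)). unfold psi. destruct (first_change x);
    apply Rmult_lt_0_compat; auto.
  - apply Ftail_pos; [apply nonneg_level | lra | auto].
  - apply Rdiv_lt_0_compat; [apply exp_pos | lra].
Qed.

Lemma contS_psi : contS psi.
Proof.
  intros x e He. destruct (first_change x) as [n|] eqn:F.
  - exists (S (S n)). intros y Hy. pose proof (first_change_Some x n F) as [F1 F2].
    assert (Y0 : y O = x O) by (symmetry; apply Hy; lia).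
    assert (Fy : first_change y = Some n).
    { apply first_change_eq_Some; rewrite Y0.
      - rewrite <- (Hy (S n)) by lia. auto.
      - intros i Hi. rewrite <- (Hy i) by lia. auto. }
    unfold psi. rewrite F, Fy, Y0, Rminus_diag, Rabs_R0; auto.
  - set (b := x O). set (K := psi_weight b). pose proof (psi_weight_pos b) as Kp. fold K in Kp.
    destruct (Ftail_cv _ beta lam (nonneg_level (negb b)) ltac:(lra) Hl _
               (level_cv H0 H1 Hinf0 Hinf1 C0 C1 (negb b)) (e / K)) as [N HN].
    { apply Rdiv_lt_0_compat; auto. }
    exists (S N). intros y Hy. pose proof (first_change_None x F) as Fc.
    assert (Y0 : y O = b) by (symmetry; apply Hy; lia).
    unfold psi. rewrite F. fold b. rewrite Y0. fold K.
    destruct (first_change y) as [m|] eqn:Fy; [|rewrite Rminus_diag, Rabs_R0; auto].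
    pose proof (first_change_Some y m Fy) as [G1 _].
    assert (Hm : (m >= N)%nat).
    { destruct (Compare_dec.le_lt_dec N m) as [L|L]; auto. exfalso. apply G1.
      rewrite <- (Hy (S m)), <- (Hy O) by lia. rewrite Fc. auto. }
    specialize (HN m Hm). unfold R_dist in HN.
    rewrite <- Rmult_minus_distr_l, Rabs_mult, Rabs_right by lra.
    apply Rmult_lt_reg_r with (/ K); [apply Rinv_0_lt_compat; auto|].
    rewrite (Rmult_comm K), Rmult_assoc, Rinv_r, Rmult_1_r by lra. auto.
Qed.

Lemma psi_cyl_repeat b n x :
  psi x * cyl (repeat b (S n)) x =
  psi_weight b * Ftail (level H0 H1 (negb b)) beta lam n * cyl (repeat b (S n) ++ [negb b]) x
  + psi x * cyl (repeat b (S (S n))) x.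
Proof.
  rewrite (cyl_app (repeat b (S n)) (negb b) x), negb_involutive, <- repeat_cons, Rmult_plus_distr_l.
  f_equal. destruct (Req_dec (cyl (repeat b (S n) ++ [negb b]) x) 0) as [Z|Z]; [rewrite Z; ring|].
  rewrite <- (negb_involutive b) in Z at 1. destruct (cyl_block _ _ _ Z) as [X F].
  rewrite negb_involutive in X. unfold psi. rewrite F, X. ring.
Qed.

(* Decomposing [[b]] along the length of the initial block of [b]s. *)
Lemma nu_psi_cyl_series b :
  is_series (fun k => psi_weight b * ncyl nu [b; negb b]
                      * (Ftail (level H0 H1 (negb b)) beta lam k / lam ^ k))
            (nu (fun x => psi x * cyl [b] x)).
Proof.
  set (Q := fun n => nu (fun x => psi x * cyl (repeat b (S n)) x)).
  assert (Cq : forall n, contS (fun x => psi x * cyl (repeat b n) x))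
    by (intros; apply contS_mult; [apply contS_psi | apply contS_cyl]).
  assert (Qrec : forall n, Q n = psi_weight b * ncyl nu [b; negb b] *
             (Ftail (level H0 H1 (negb b)) beta lam n / lam ^ n) + Q (S n)).
  { intros n. unfold Q. rewrite (nu_ext nu _ _ (psi_cyl_repeat b n)), nu_plus, nu_scal; auto;
      try apply contS_cyl; [| apply contS_mult; [apply contS_const | apply contS_cyl]].
    f_equal. fold (ncyl nu (repeat b (S n) ++ [negb b])).
    rewrite <- (ncyl_repeat H H0 H1 beta lam nu HR Hnu b [negb b] n).
    field. apply pow_nonzero; lra. }
  destruct (contS_max psi contS_psi) as [xm Hxm].
  pose proof (psi_pos xm).
  apply (is_series_of_remainder _ _ (fun n => Q (S n))).
  - induction n; [exact (Qrec O)|]. rewrite tech5, IHn, (Qrec (S n)). ring.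
  - apply (is_lim_seq_le_le (fun _ => 0) _ (fun n => psi xm * / lam ^ S n));
      [|apply is_lim_seq_const|].
    + intros n. unfold Q. split.
      * apply nu_nonneg; auto. intros x. pose proof (psi_pos x).
        destruct (cyl_0_1 (repeat b (S (S n))) x) as [Z|Z]; rewrite Z; lra.
      * apply Rle_trans with (nu (fun x => psi xm * cyl (repeat b (S (S n))) x)).
        -- apply nu_mono; auto; [apply contS_mult; [apply contS_const | apply contS_cyl]|].
           intros x. specialize (Hxm x). destruct (cyl_0_1 (repeat b (S (S n))) x) as [Z|Z];
               rewrite Z; lra.
        -- rewrite nu_scal by (auto; apply contS_cyl). apply Rmult_le_compat_l; [lra|].
           apply (ncyl_repeat_le H H0 H1 beta lam nu HR Hbeta Hnu).
    + replace (Finite 0) with (Rbar_mult (psi xm) 0) by (simpl; f_equal; ring).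
      apply is_lim_seq_scal_l, (is_lim_seq_incr_1 (fun n => / lam ^ n)), is_lim_seq_inv_pow, Hl.
Qed.

Lemma nu_psi_cyl b :
  nu (fun x => psi x * cyl [b] x) =
    psi_weight b * ncyl nu [b; negb b] * Ftb (level H0 H1 (negb b)) beta lam.
Proof.
  pose proof (nu_psi_cyl_series b) as S1.
  set (c := psi_weight b * ncyl nu [b; negb b]) in S1 |- *.
  assert (Hc : 0 < c) by (apply Rmult_lt_0_compat;
    [apply psi_weight_pos | apply (ncyl_change_pos H H0 H1 beta lam nu HR Hbeta Hnu)]).
  assert (S2 : is_series (fun k => Ftail (level H0 H1 (negb b)) beta lam k / lam ^ k)
                         (/ c * nu (fun x => psi x * cyl [b] x))).
  { apply (is_series_ext_R (fun k => / c * (c * (Ftail (level H0 H1 (negb b)) beta lam k / lam ^ k))));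
      [intros; field; split; [apply pow_nonzero |]; lra | apply is_series_scal_R, S1]. }
  unfold Ftb. rewrite (series_eq _ _
      (is_series_Ftb_tails _ beta lam (nonneg_level _) ltac:(lra) Hl (ex_intro _ _ S2))).
  rewrite (is_series_unique _ _ S2). field. lra.
Qed.

Lemma Ftb_level_pos b : 0 < Ftb (level H0 H1 b) beta lam.
Proof.
  pose proof (is_series_Ftb _ beta lam (nonneg_level b) ltac:(lra) Hl) as Ser.
  assert (Hpos : forall n, 0 < INR (S n) * / lam ^ S n * exp (- beta * level H0 H1 b (S n))).
  { intros n. pose proof (inv_pow_pos lam (S n) ltac:(lra)). pose proof (lt_0_INR (S n) ltac:(lia)).
    pose proof (exp_pos (- beta * level H0 H1 b (S n))).
    apply Rmult_lt_0_compat; [apply Rmult_lt_0_compat|]; lra. }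
  eapply Rlt_le_trans; [apply (Hpos O) | apply (is_series_partial_le _ _ O Ser)].
  intros n. left. apply Hpos.
Qed.

End ExplicitEigenfunction.

(* [Phi] is a multiple of [psi], and [psi] integrates explicitly over the cylinders [[b]]. *)
Lemma mu_cyl_ratio H H0 H1 Hinf0 Hinf1 beta lam nu Phi :
  reduced_double_well H H0 H1 -> Un_cv H0 Hinf0 -> Un_cv H1 Hinf1 -> 0 < beta ->
  is_eigenmeasure H beta lam nu -> is_eigenfunction H beta lam Phi ->
  mu_cyl Phi nu false / mu_cyl Phi nu true =
    Fb H0 beta lam ^ 2 * Ftb H1 beta lam / Ftb H0 beta lam.
Proof.
  intros R C0 C1 Hb Hnu [Cf [Pf [Ef _]]]. pose proof (proj1 Hnu) as P.
  set (ps := psi H0 H1 Hinf0 Hinf1 beta lam).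
  destruct (eigenfunction_unique H beta lam Phi ps Cf) as [t [Ht Et]]; auto.
  - apply (contS_psi H _ _ _ _ beta lam nu); auto.
  - apply (psi_pos H _ _ _ _ beta lam nu); auto.
  - apply (Lop_psi H _ _ _ _ beta lam nu); auto.
  - assert (Vb : forall b, nu (fun x => Phi x * Defs.ind b x) =
               t * (psi_weight H0 beta lam b * ncyl nu [b; negb b]
                    * Ftb (level H0 H1 (negb b)) beta lam)).
    { intros b. rewrite <- (nu_psi_cyl H H0 H1 Hinf0 Hinf1 beta lam nu R C0 C1 Hb Hnu b).
      rewrite <- nu_scal by first [exact P | apply contS_mult;
        [apply (contS_psi H _ _ _ _ beta lam nu); auto | apply contS_cyl]].
      apply nu_ext. intros x. rewrite Et, ind_cyl. unfold ps. ring. }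
    pose proof (Fb_level_eq H H0 H1 beta lam nu R Hb Hnu false) as Fv.
    pose proof (ncyl_change_pos H H0 H1 beta lam nu R Hb Hnu false).
    pose proof (ncyl_change_pos H H0 H1 beta lam nu R Hb Hnu true).
    pose proof (Fb_level_pos H H0 H1 beta lam nu R Hb Hnu false).
    pose proof (Ftb_level_pos H H0 H1 beta lam nu R Hb Hnu false).
    pose proof (Ftb_level_pos H H0 H1 beta lam nu R Hb Hnu true).
    simpl in *.
    assert (Pos : 0 < nu Phi).
    { apply Rlt_le_trans with (nu (fun x => Phi x * Defs.ind true x)).
      - rewrite Vb. simpl. apply Rmult_lt_0_compat; auto. apply Rmult_lt_0_compat; auto. lra.
      - apply nu_mono; auto; [apply contS_mult; auto; rewrite ind_cyl; apply contS_cyl|].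
        intros x. specialize (Pf x). unfold Defs.ind. destruct (Bool.eqb (x O) true); lra. }
    unfold mu_cyl. rewrite !Vb. simpl. rewrite Fv. field. repeat split; lra.
Qed.

(** * Estimates of [F] and [Ftilde] *)

Definition on_list (l : list nat) (k : nat) (c : R) : R := if in_dec Nat.eq_dec k l then c else 0.

Lemma is_series_single a (c : R) :
  (1 <= a)%nat -> is_series (fun k => if Nat.eq_dec (S k) a then c else 0) c.
Proof.
  intros Ha. apply (is_series_of_remainder _ _
      (fun n => if Compare_dec.lt_dec n (a - 1) then c else 0)).
  - induction n.
    + unfold sum_f_R0. destruct (Nat.eq_dec 1 a), (Compare_dec.lt_dec 0 (a - 1)); try ring; lia.
    + rewrite tech5. rewrite IHn at 1.
      destruct (Nat.eq_dec (S (S n)) a), (Compare_dec.lt_dec n (a - 1)),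
        (Compare_dec.lt_dec (S n) (a - 1)); try ring; lia.
  - apply (is_lim_seq_ext_loc (fun _ => 0)); [|apply is_lim_seq_const].
    exists (a - 1)%nat. intros n Hn. destruct (Compare_dec.lt_dec n (a - 1)); [lia | auto].
Qed.

Lemma is_series_on_list (l : list nat) (c : nat -> R) : NoDup l -> (forall k, In k l -> (1 <= k)%nat) ->
  is_series (fun k => on_list l (S k) (c (S k))) (fold_right (fun k s => c k + s) 0 l).
Proof.
  induction l as [|a l IH]; intros Nd Hp; simpl.
  - apply (is_series_ext_R (fun _ => 0)); [intros; reflexivity|].
    apply (is_series_of_remainder _ _ (fun _ => 0)); [|apply is_lim_seq_const].
    induction n; simpl; [ring | rewrite <- IHn; ring].
  - inversion Nd as [|? ? Na Nl]; subst.
    apply (is_series_ext_R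
        (fun k => (if Nat.eq_dec (S k) a then c a else 0) + on_list l (S k) (c (S k)))).
    + intros k. unfold on_list. destruct (Nat.eq_dec (S k) a) as [E|E];
        destruct (in_dec Nat.eq_dec (S k) (a :: l)) as [I|I];
          destruct (in_dec Nat.eq_dec (S k) l) as [J|J];
        simpl in I; subst; try tauto; try ring.
      destruct I; [congruence | tauto].
    + apply is_series_plus_R; [apply is_series_single, Hp; left; auto|]. apply IH; auto.
      intros k Hk. apply Hp. right; auto.
Qed.

Lemma fold_right_const (l : list nat) c : fold_right (fun _ s => c + s) 0 l = INR (length l) * c.
Proof. induction l; cbn [fold_right length]; [simpl; ring | rewrite IHl, S_INR; ring]. Qed.

Definition resonant_sum (l : list nat) lam := fold_right (fun k s => / lam ^ k + s) 0 l.

Lemma resonant_sum_bounds (l : list nat) lam K : 1 <= lam -> (forall k, In k l -> (k <= K)%nat) ->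
  INR (length l) * / lam ^ K <= resonant_sum l lam <= INR (length l).
Proof.
  intros Hl HK. unfold resonant_sum. induction l as [|a l IH]; cbn [fold_right length]; [simpl; lra|].
  rewrite S_INR. destruct IH as [I1 I2]; [intros; apply HK; right; auto|].
  pose proof (inv_pow_le_1 lam a Hl).
  assert (/ lam ^ K <= / lam ^ a).
  { apply Rinv_le_contravar; [apply pow_lt; lra|]. apply Rle_pow; auto. apply HK; left; auto. }
  lra.
Qed.

Section LevelEstimates.
Variables (h w : nat -> R) (L hc m W beta lam : R) (l : list nat) (K : nat).
Hypotheses (Hh : nonneg_levels h) (Hb : 0 <= beta) (Hl : 1 < lam) (Nd : NoDup l)
  (Hres : forall k, In k l -> (1 <= k)%nat /\ (k <= K)%nat /\ h k = hc)
  (Hm : forall k, (1 <= k)%nat -> ~ In k l -> m <= h k) (HmL : m <= L) (HcL : hc <= L)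
  (Hw : forall k, (1 <= k)%nat -> Rabs (h k - L) <= w k) (HW : is_series (fun k => w (S k)) W).

Lemma off_resonance_bound k : ~ In (S k) l ->
  Rabs (exp (- beta * h (S k)) - exp (- beta * L)) <= beta * w (S k) * exp (- beta * m).
Proof.
  intros Hk. eapply Rle_trans; [apply exp_neg_mult_lipschitz; [auto | apply Hm; auto; lia | auto]|].
  apply Rmult_le_compat_r; [left; apply exp_pos|]. apply Rmult_le_compat_l; auto. apply Hw; lia.
Qed.

Lemma on_resonance_eq k : In (S k) l ->
  Rabs (exp (- beta * h (S k)) - exp (- beta * L)) = exp (- beta * hc) - exp (- beta * L).
Proof.
  intros Hk. destruct (Hres _ Hk) as [_ [_ ->]]. apply Rabs_right.
  apply Rle_ge. cut (exp (- beta * L) <= exp (- beta * hc)); [lra|]. apply exp_le_mono. nra.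
Qed.

Lemma w_nonneg k : 0 <= w (S k).
Proof. eapply Rle_trans; [apply Rabs_pos | apply Hw; lia]. Qed.

Lemma Fb_estimate :
  Rabs (Fb h beta lam - exp (- beta * L) / (lam - 1)
        - (exp (- beta * hc) - exp (- beta * L)) * resonant_sum l lam)
    <= beta * W * exp (- beta * m).
Proof.
  set (D := exp (- beta * hc) - exp (- beta * L)).
  set (r := fun k => if in_dec Nat.eq_dec (S k) l then 0
                     else / lam ^ S k * (exp (- beta * h (S k)) - exp (- beta * L))).
  assert (Rb : forall k, Rabs (r k) <= beta * exp (- beta * m) * w (S k)).
  { intros k. unfold r. destruct (in_dec _ _ _) as [I|I].
    - rewrite Rabs_R0. pose proof (w_nonneg k). pose proof (exp_pos (- beta * m)).
      apply Rmult_le_pos; [apply Rmult_le_pos|]; lra.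
    - rewrite Rabs_mult, Rabs_right by (left; apply inv_pow_pos; lra).
      pose proof (off_resonance_bound k I). pose proof (inv_pow_le_1 lam (S k) ltac:(lra)).
      pose proof (Rabs_pos (exp (- beta * h (S k)) - exp (- beta * L))).
      apply Rle_trans with (1 * Rabs (exp (- beta * h (S k)) - exp (- beta * L))); [|lra].
      apply Rmult_le_compat_r; lra. }
  assert (Hr : is_series r (Series r)).
  { apply Series_correct, (ex_series_le_R _ (fun k => beta * exp (- beta * m) * w (S k))); auto.
    eexists; apply is_series_scal_R, HW. }
  assert (Dec : Fb h beta lam = exp (- beta * L) / (lam - 1) + D * resonant_sum l lam + Series r).
  { unfold Fb. apply series_eq.
    apply (is_series_ext_R (fun k => (exp (- beta * L) * / lam ^ S k
                     + on_list l (S k) (/ lam ^ S k) * D) + r k)).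
    - intros k. unfold r, on_list, D. destruct (in_dec _ _ _) as [I|I]; [|ring].
      destruct (Hres _ I) as [_ [_ ->]]. ring.
    - apply is_series_plus_R; auto. apply is_series_plus_R.
      + apply is_series_scal_R, is_series_inv_pow_S, Hl.
      + apply (is_series_ext_R (fun k => D * on_list l (S k) (/ lam ^ S k))); [intros; ring|].
        apply is_series_scal_R, (is_series_on_list l (fun k => / lam ^ k)); auto.
        intros k Hk. apply Hres, Hk. }
  rewrite Dec. replace (_ + _ + _ - _ - _) with (Series r) by (fold D; ring).
  apply (Series_abs_le _ _ _ Rb).
  replace (beta * W * exp (- beta * m)) with (beta * exp (- beta * m) * W) by ring.
  apply is_series_scal_R, HW.
Qed.

Lemma Ftb_term_bound k :
  Rabs (INR (S k) * / lam ^ S k * (exp (- beta * h (S k)) - exp (- beta * L)))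
    <= / (lam - 1) * (beta * exp (- beta * m)) * w (S k) + on_list l (S k) (INR K * exp (- beta * hc)).
Proof.
  rewrite Rabs_mult.
  pose proof (n_inv_pow_le lam (S k) Hl). pose proof (pos_INR (S k)).
  pose proof (inv_pow_pos lam (S k) ltac:(lra)).
  rewrite Rabs_right by (apply Rle_ge, Rmult_le_pos; lra).
  pose proof (Rabs_pos (exp (- beta * h (S k)) - exp (- beta * L))).
  assert (0 <= / (lam - 1) * (beta * exp (- beta * m)) * w (S k)).
  { pose proof (w_nonneg k). pose proof (exp_pos (- beta * m)).
    apply Rmult_le_pos; [apply Rmult_le_pos; [left; apply Rinv_0_lt_compat|]|]; nra. }
  unfold on_list. destruct (in_dec _ _ _) as [I|I].
  - rewrite (on_resonance_eq k I). destruct (Hres _ I) as [_ [HK _]].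
    assert (exp (- beta * L) <= exp (- beta * hc)) by (apply exp_le_mono; nra).
    assert (INR (S k) * / lam ^ S k <= INR K).
    { pose proof (inv_pow_le_1 lam (S k) ltac:(lra)). apply Rle_trans with (INR (S k)); [nra|].
      apply le_INR; auto. }
    assert (INR (S k) * / lam ^ S k * (exp (- beta * hc) - exp (- beta * L))
      <= INR K * exp (- beta * hc))
      by (pose proof (exp_pos (- beta * L)); apply Rmult_le_compat; [apply Rmult_le_pos | | |]; lra).
    lra.
  - rewrite Rplus_0_r. pose proof (off_resonance_bound k I).
    replace (/ (lam - 1) * (beta * exp (- beta * m)) * w (S k))
      with (/ (lam - 1) * (beta * w (S k) * exp (- beta * m))) by ring.
    apply Rmult_le_compat; auto. apply Rmult_le_pos; lra.
Qed.

Lemma Ftb_estimate :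
  Rabs (Ftb h beta lam - exp (- beta * L) * lam / (lam - 1) ^ 2)
    <= beta * W * exp (- beta * m) / (lam - 1) + INR (length l) * (INR K * exp (- beta * hc)).
Proof.
  assert (Dec : is_series
                  (fun k => INR (S k) * / lam ^ S k * (exp (- beta * h (S k)) - exp (- beta * L)))
                  (Ftb h beta lam - exp (- beta * L) * lam / (lam - 1) ^ 2)).
  { apply (is_series_ext_R (fun k => INR (S k) * / lam ^ S k * exp (- beta * h (S k))
                                     - exp (- beta * L) * (INR (S k) * / lam ^ S k))); [intros; ring|].
    apply is_series_minus_R; [apply is_series_Ftb; auto|].
    replace (exp (- beta * L) * lam / (lam - 1) ^ 2) with (exp (- beta * L) * (lam / (lam - 1) ^ 2))
      by (unfold Rdiv; ring).
    apply is_series_scal_R, is_series_n_inv_pow, Hl. }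
  rewrite <- (is_series_unique _ _ Dec). apply (Series_abs_le _ _ _ Ftb_term_bound).
  apply is_series_plus_R.
  - replace (beta * W * exp (- beta * m) / (lam - 1))
      with (/ (lam - 1) * (beta * exp (- beta * m)) * W) by (unfold Rdiv; ring).
    apply is_series_scal_R, HW.
  - rewrite <- fold_right_const. apply (is_series_on_list l (fun _ => INR K * exp (- beta * hc))); auto.
    intros k Hk. apply Hres, Hk.
Qed.

End LevelEstimates.

(** * Asymptotics as [beta -> +oo] *)

Lemma eventually_pos : Rbar_locally p_infty (fun b => 0 < b).
Proof. exists 0. auto. Qed.

Lemma is_lim_abs_le (f g : R -> R) :
  Rbar_locally p_infty (fun b => Rabs (f b) <= g b) -> is_lim g p_infty 0 -> is_lim f p_infty 0.
Proof.
  intros Hev Hg. apply (is_lim_le_le_loc (fun b => - g b) g); auto.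
  - eapply filter_imp; [|exact Hev]. intros b Hb. apply Rabs_le_between, Hb.
  - replace (Finite 0) with (Rbar_opp 0) by (simpl; f_equal; ring). apply is_lim_opp, Hg.
Qed.

Lemma is_lim_mult_R (f g : R -> R) (a b : R) :
  is_lim f p_infty a -> is_lim g p_infty b -> is_lim (fun x => f x * g x) p_infty (a * b).
Proof. intros. apply (is_lim_mult f g p_infty a b); auto. exact I. Qed.

Lemma is_lim_scal_R (f : R -> R) (a c : R) :
  is_lim f p_infty a -> is_lim (fun x => c * f x) p_infty (c * a).
Proof. intros. apply (is_lim_scal_l f c p_infty a); auto. Qed.

Lemma is_lim_of_dev (f : R -> R) (a : R) :
  is_lim (fun x => f x - a) p_infty 0 -> is_lim f p_infty a.
Proof.
  intros T. apply (is_lim_ext (fun x => (f x - a) + a)); [intros; ring|].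
  replace (Finite a) with (Finite (0 + a)) by (f_equal; ring). apply is_lim_plus'; auto.
  apply is_lim_const.
Qed.

Lemma eventually_lt (f : R -> R) (a eps : R) : is_lim f p_infty a -> 0 < eps ->
  Rbar_locally p_infty (fun x => Rabs (f x - a) < eps).
Proof. intros T He. apply is_lim_spec in T. exact (T (mkposreal eps He)). Qed.

Lemma is_lim_pow_R (f : R -> R) (a : R) n :
  is_lim f p_infty a -> is_lim (fun x => f x ^ n) p_infty (a ^ n).
Proof. intros T. induction n; simpl; [apply is_lim_const | apply is_lim_mult_R; auto]. Qed.

Lemma is_lim_neg_lin eta : 0 < eta -> is_lim (fun b => - b * eta) p_infty m_infty.
Proof.
  intros He. apply is_lim_spec. intros M. exists (- M / eta). intros b Hb.
  apply Rmult_lt_compat_r with (r := eta) in Hb; auto.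
  replace (- M / eta * eta) with (- M) in Hb by (field; lra). lra.
Qed.

Lemma is_lim_exp_decay eta : 0 < eta -> is_lim (fun b => exp (- b * eta)) p_infty 0.
Proof.
  intros He. apply (is_lim_comp exp (fun b => - b * eta) p_infty 0 m_infty).
  - apply is_lim_exp_m.
  - apply is_lim_neg_lin, He.
  - exists 0. intros; discriminate.
Qed.

Lemma is_lim_mult_exp_decay eta : 0 < eta -> is_lim (fun b => b * exp (- b * eta)) p_infty 0.
Proof.
  intros He.
  assert (T : is_lim (fun b => (- b * eta) * exp (- b * eta)) p_infty 0).
  { apply (is_lim_comp (fun y => y * exp y) (fun b => - b * eta) p_infty 0 m_infty).
    - apply is_lim_mul_exp_m.
    - apply is_lim_neg_lin, He.
    - exists 0. intros; discriminate. }
  apply (is_lim_scal_l _ (- / eta)) in T. simpl in T. rewrite Rmult_0_r in T.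
  eapply is_lim_ext; [|exact T]. intros b. simpl. field. lra.
Qed.

Lemma lim_infty_of_is_lim (f h : R -> R) (l : R) :
  Rbar_locally p_infty (fun b => f b = h b) -> is_lim h p_infty l -> lim_infty f l.
Proof.
  intros E T eps Heps. apply (is_lim_ext_loc h f) in T.
  - apply is_lim_spec in T. destruct (T (mkposreal eps Heps)) as [M HM].
    exists (M + 1). intros b Hb. apply HM. lra.
  - eapply filter_imp; [|exact E]. intros b Hb. auto.
Qed.

Lemma asym_of_is_lim (f g h : R -> R) :
  Rbar_locally p_infty (fun b => f b / g b = h b) -> is_lim h p_infty 1 -> asym f g.
Proof. apply lim_infty_of_is_lim. Qed.

(** The positive root [c] of [c^2 = kappa c + 1]. *)
Definition kappa_root (kap : R) := (kap + sqrt (kap ^ 2 + 4)) / 2.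

Lemma kappa_root_spec kap :
  0 <= kap -> 0 < kappa_root kap /\ kappa_root kap * kappa_root kap = kap * kappa_root kap + 1.
Proof.
  intros Hk. unfold kappa_root. pose proof (sqrt_sqrt (kap ^ 2 + 4) ltac:(nra)).
  pose proof (sqrt_lt_R0 (kap ^ 2 + 4) ltac:(nra)). split; nra.
Qed.

Lemma kappa_root_dist kap y : 0 <= kap -> 0 < y ->
  Rabs (y - / kappa_root kap) <= kappa_root kap * Rabs (y * y + kap * y - 1).
Proof.
  intros Hk Hy. destruct (kappa_root_spec kap Hk) as [Hc E]. set (c := kappa_root kap) in *.
  assert (Hys : 0 < / c) by (apply Rinv_0_lt_compat; auto).
  replace (y * y + kap * y - 1) with ((y - / c) * (y + / c + kap)).
  2: { apply (Rmult_eq_reg_r (c * c)); [|nra]. field_simplify; [|lra]. nra. }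
  rewrite Rabs_mult, (Rabs_right (y + / c + kap)) by lra.
  pose proof (Rabs_pos (y - / c)).
  replace (Rabs (y - / c)) with (c * (Rabs (y - / c) * / c)) at 1 by (field; lra).
  apply Rmult_le_compat_l; [lra|]. apply Rmult_le_compat_l; lra.
Qed.

Lemma perturbed_quadratic_bounds kap y d s e eps : 0 <= kap -> 0 < y -> 0 <= s <= kap ->
  Rabs d <= eps -> Rabs e <= eps -> eps <= / (2 * kap + 4) -> (y + d) * (y + s + e) = 1 ->
  0 < y + d -> 0 < y + s + e -> / (2 * kap + 4) <= y <= 1 + eps.
Proof.
  intros Hk Hy Hs Hd He Heps Eq P1 P2.
  apply Rabs_le_between in Hd. apply Rabs_le_between in He.
  set (a := / (2 * kap + 4)) in *.
  assert (Ha : a * (2 * kap + 4) = 1) by (unfold a; field; lra).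
  assert (0 < a) by (unfold a; apply Rinv_0_lt_compat; lra).
  split; apply Rnot_lt_le; intros Hl.
  - assert ((y + d) * (y + s + e) < 2 * a * (kap + 2 * a)) by (apply Rmult_le_0_lt_compat; lra).
    assert (a <= 1 / 4) by nra. nra.
  - assert (1 * 1 < (y + d) * (y + s + e)) by (apply Rmult_le_0_lt_compat; lra). lra.
Qed.

Lemma W_nonneg (w : nat -> R) W Hinf (h : nat -> R) :
  (forall k, (1 <= k)%nat -> Rabs (h k - Hinf) <= w k) -> is_series (fun k => w (S k)) W -> 0 <= W.
Proof.
  intros Hw HW. eapply Rle_trans; [|apply (is_series_partial_le _ _ O HW)].
  - simpl. eapply Rle_trans; [apply Rabs_pos | apply Hw; lia].
  - intros n. eapply Rle_trans; [apply Rabs_pos | apply Hw; lia].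
Qed.

Section Asymptotics.
Variables (H : Sigma -> R) (H0 H1 w0 w1 : nat -> R) (Hinf0 Hinf1 W0 W1 eta0 eta1 : R)
  (l : list nat) (K : nat)
  (lam : R -> R) (Phi : R -> Sigma -> R) (nu : R -> (Sigma -> R) -> R).

Let gam := (Hinf0 + Hinf1) / 2.
Let delta := (Hinf1 - Hinf0) / 2.

Hypotheses (HR : reduced_double_well H H0 H1) (C0 : Un_cv H0 Hinf0) (C1 : Un_cv H1 Hinf1)
  (Hgam : 0 < gam)
  (Heigf : forall b, 0 < b -> is_eigenfunction H b (lam b) (Phi b))
  (Heigm : forall b, 0 < b -> is_eigenmeasure H b (lam b) (nu b))
  (Nd : NoDup l) (Hres : forall k, In k l -> (1 <= k)%nat /\ (k <= K)%nat /\ H1 k = delta)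
  (Hw0 : forall k, (1 <= k)%nat -> Rabs (H0 k - Hinf0) <= w0 k) (HW0 : is_series (fun k => w0 (S k)) W0)
  (Hw1 : forall k, (1 <= k)%nat -> Rabs (H1 k - Hinf1) <= w1 k) (HW1 : is_series (fun k => w1 (S k)) W1)
  (He0 : 0 < eta0) (Hgap0 : forall k, (1 <= k)%nat -> eta0 - delta <= H0 k)
  (Hgap0' : eta0 - delta <= Hinf0)
  (He1 : 0 < eta1) (Hgap1 : forall k, (1 <= k)%nat -> ~ In k l -> delta + eta1 <= H1 k)
  (Hgap1' : delta + eta1 <= Hinf1).

Let kap := INR (length l).

(** Normalized unknowns: [lam - 1 = E / y], [F^0 = A (y + d0)], [F^1 = (y + Sr + e1) / A]. *)
Definition E b := exp (- b * gam).
Definition A b := exp (b * delta).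
Definition y b := E b / (lam b - 1).
Definition d0 b := Fb H0 b (lam b) / A b - y b.
Definition Sr b := resonant_sum l (lam b).
Definition e1 b := A b * Fb H1 b (lam b) - y b - Sr b.
Definition r0 b := Ftb H0 b (lam b) / (exp (- b * Hinf0) / (lam b - 1) ^ 2) - lam b.
Definition r1 b := Ftb H1 b (lam b) / (exp (- b * Hinf1) / (lam b - 1) ^ 2) - lam b.
Definition s0 b := b * W0 * exp (- b * eta0).
Definition s1 b := b * W1 * exp (- b * eta1).

Ltac exp_identity := unfold E, A, gam, delta; unfold Rdiv;
  rewrite ?Rinv_mult, <- ?exp_Ropp, <- ?exp_plus; f_equal; field.

Lemma exp_Hinf0 b : exp (- b * Hinf0) = A b * E b.
Proof. exp_identity. Qed.

Lemma exp_Hinf1 b : exp (- b * Hinf1) = E b / A b.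
Proof. exp_identity. Qed.

Lemma E_pos b : 0 < E b.
Proof. apply exp_pos. Qed.

Lemma A_pos b : 0 < A b.
Proof. apply exp_pos. Qed.

Lemma kap_nonneg : 0 <= kap.
Proof. apply pos_INR. Qed.

Lemma s0_nonneg b : 0 < b -> 0 <= s0 b.
Proof.
  intros Hb. pose proof (W_nonneg _ _ _ _ Hw0 HW0). pose proof (exp_pos (- b * eta0)).
  unfold s0. apply Rmult_le_pos; [apply Rmult_le_pos|]; lra.
Qed.

Lemma s1_nonneg b : 0 < b -> 0 <= s1 b.
Proof.
  intros Hb. pose proof (W_nonneg _ _ _ _ Hw1 HW1). pose proof (exp_pos (- b * eta1)).
  unfold s1. apply Rmult_le_pos; [apply Rmult_le_pos|]; lra.
Qed.

Section AtBeta.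
Variable b : R.
Hypothesis Hb : 0 < b.

Lemma lam_gt_1 : 1 < lam b.
Proof. apply (eigenvalue_gt_1 H H0 H1 b (lam b) (nu b)); auto. Qed.

Lemma y_pos : 0 < y b.
Proof. pose proof lam_gt_1. apply Rdiv_lt_0_compat; [apply E_pos | lra]. Qed.

Lemma lam_minus_1_eq : lam b - 1 = E b / y b.
Proof. pose proof lam_gt_1. pose proof (E_pos b). unfold y. field. lra. Qed.

Lemma Fb_H0_eq : Fb H0 b (lam b) = A b * (y b + d0 b).
Proof. pose proof (A_pos b). unfold d0. field. lra. Qed.

Lemma Fb_H1_eq : Fb H1 b (lam b) = (y b + Sr b + e1 b) / A b.
Proof. pose proof (A_pos b). unfold e1. field. lra. Qed.

Lemma perturbed_quadratic : (y b + d0 b) * (y b + Sr b + e1 b) = 1.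
Proof.
  pose proof (A_pos b). rewrite <- (Fb_product H H0 H1 b (lam b) (nu b) HR Hb (Heigm b Hb)).
  rewrite Fb_H0_eq, Fb_H1_eq. field. lra.
Qed.

Lemma y_d0_pos : 0 < y b + d0 b.
Proof.
  pose proof (A_pos b). pose proof (Fb_level_pos H H0 H1 b (lam b) (nu b) HR Hb (Heigm b Hb) false).
  simpl in *. rewrite Fb_H0_eq in *. nra.
Qed.

Lemma y_S_e1_pos : 0 < y b + Sr b + e1 b.
Proof. pose proof perturbed_quadratic. pose proof y_d0_pos. nra. Qed.

Lemma S_bounds : kap * / lam b ^ K <= Sr b <= kap.
Proof.
  pose proof lam_gt_1. apply resonant_sum_bounds; [lra|]. intros k Hk. apply Hres, Hk.
Qed.

Lemma S_nonneg : 0 <= Sr b.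
Proof.
  pose proof S_bounds. pose proof kap_nonneg.
  pose proof (inv_pow_pos (lam b) K ltac:(pose proof lam_gt_1; lra)). nra.
Qed.

Lemma d0_bound : Rabs (d0 b) <= s0 b.
Proof.
  pose proof lam_gt_1. pose proof (A_pos b).
  assert (B : Rabs (Fb H0 b (lam b) - exp (- b * Hinf0) / (lam b - 1)
                  - (exp (- b * Hinf0) - exp (- b * Hinf0)) * resonant_sum [] (lam b))
              <= b * W0 * exp (- b * (eta0 - delta))).
  { apply Fb_estimate with (w := w0) (K := O); auto; try lra; try apply NoDup_nil;
      try (intros k Hk; contradiction Hk); intros k Hk _; apply Hgap0, Hk. }
  simpl resonant_sum in B. rewrite Rmult_0_r, Rminus_0_r, exp_Hinf0 in B.
  replace (exp (- b * (eta0 - delta))) with (A b * exp (- b * eta0)) in B by exp_identity.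
  replace (d0 b) with ((Fb H0 b (lam b) - A b * E b / (lam b - 1)) / A b) by (unfold d0, y; field; lra).
  unfold Rdiv at 1. rewrite Rabs_mult, Rabs_inv, (Rabs_right (A b)) by lra.
  apply Rmult_le_reg_r with (A b); auto. rewrite Rmult_assoc, Rinv_l, Rmult_1_r by lra.
  unfold s0. lra.
Qed.

Lemma e1_bound : Rabs (e1 b) <= s1 b + kap * E b.
Proof.
  pose proof lam_gt_1. pose proof (A_pos b). pose proof (E_pos b).
  pose proof S_bounds. pose proof S_nonneg.
  assert (B : Rabs (Fb H1 b (lam b) - exp (- b * Hinf1) / (lam b - 1)
                  - (exp (- b * delta) - exp (- b * Hinf1)) * resonant_sum l (lam b))
              <= b * W1 * exp (- b * (delta + eta1))).
  { apply Fb_estimate with (w := w1) (K := K); auto; unfold delta, gam in *; lra. }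
  rewrite exp_Hinf1 in B.
  replace (exp (- b * delta)) with (/ A b) in B by exp_identity.
  replace (exp (- b * (delta + eta1))) with (exp (- b * eta1) / A b) in B by exp_identity.
  replace (e1 b) with (A b *
      (Fb H1 b (lam b) - E b / A b / (lam b - 1) - (/ A b - E b / A b) * Sr b) - E b * Sr b)
    by (unfold e1, y; field; lra).
  eapply Rle_trans; [apply Rabs_triang|]. rewrite Rabs_Ropp, Rabs_mult, (Rabs_right (A b)) by lra.
  rewrite (Rabs_right (E b * Sr b)) by (apply Rle_ge, Rmult_le_pos; lra).
  apply Rplus_le_compat; [|nra].
  apply Rmult_le_compat_l with (r := A b) in B; [|lra].
  replace (A b * (b * W1 * (exp (- b * eta1) / A b))) with (s1 b) in B by (unfold s1; field; lra).
  exact B.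
Qed.

Lemma ratio_dev_le X q M : 0 < q -> Rabs (X - q * lam b) <= M -> Rabs (X / q - lam b) <= M / q.
Proof.
  intros Hq HM. replace (X / q - lam b) with ((X - q * lam b) / q) by (field; lra).
  unfold Rdiv. rewrite Rabs_mult, Rabs_inv, (Rabs_right q) by lra.
  apply Rmult_le_compat_r; [left; apply Rinv_0_lt_compat|]; lra.
Qed.

Lemma r0_bound : Rabs (r0 b) <= s0 b / y b.
Proof.
  pose proof lam_gt_1. pose proof (A_pos b). pose proof (E_pos b). pose proof y_pos.
  assert (B : Rabs (Ftb H0 b (lam b) - exp (- b * Hinf0) * lam b / (lam b - 1) ^ 2)
              <= b * W0 * exp (- b * (eta0 - delta)) / (lam b - 1)
                 + INR (length (@nil nat)) * (INR O * exp (- b * Hinf0))).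
  { apply Ftb_estimate with (w := w0); auto; try lra; try apply NoDup_nil;
      try (intros k Hk; contradiction Hk); try (intros k Hk _; apply Hgap0, Hk).
    apply (nonneg_level H H0 H1 HR false). }
  simpl in B. rewrite Rmult_0_l, Rplus_0_r in B.
  replace (exp (- b * (eta0 - delta))) with (A b * exp (- b * eta0)) in B by exp_identity.
  replace (s0 b / y b) with (b * W0 * (A b * exp (- b * eta0)) / (lam b - 1)
                             / (exp (- b * Hinf0) / (lam b - 1) ^ 2))
    by (rewrite exp_Hinf0, lam_minus_1_eq; unfold s0; field; repeat split; lra).
  apply ratio_dev_le; [apply Rdiv_lt_0_compat; [apply exp_pos | apply pow_lt; lra]|].
  replace (exp (- b * Hinf0) / (lam b - 1) ^ 2 * lam b)
    with (exp (- b * Hinf0) * lam b / (lam b - 1) ^ 2) by (field; lra).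
  exact B.
Qed.

Lemma r1_bound : Rabs (r1 b) <= s1 b / y b + kap * INR K * E b / y b ^ 2.
Proof.
  pose proof lam_gt_1. pose proof (A_pos b). pose proof (E_pos b). pose proof y_pos.
  assert (B : Rabs (Ftb H1 b (lam b) - exp (- b * Hinf1) * lam b / (lam b - 1) ^ 2)
              <= b * W1 * exp (- b * (delta + eta1)) / (lam b - 1) + kap * (INR K * exp (- b * delta))).
  { apply Ftb_estimate with (w := w1); auto; try (unfold delta, gam in *; lra).
    apply (nonneg_level H H0 H1 HR true). }
  replace (exp (- b * delta)) with (/ A b) in B by exp_identity.
  replace (exp (- b * (delta + eta1))) with (exp (- b * eta1) / A b) in B by exp_identity.
  replace (s1 b / y b + kap * INR K * E b / y b ^ 2)
    with ((b * W1 * (exp (- b * eta1) / A b) / (lam b - 1) + kap * (INR K * / A b))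
          / (exp (- b * Hinf1) / (lam b - 1) ^ 2))
    by (rewrite exp_Hinf1, lam_minus_1_eq; unfold s1; field; repeat split; lra).
  apply ratio_dev_le; [apply Rdiv_lt_0_compat; [apply exp_pos | apply pow_lt; lra]|].
  replace (exp (- b * Hinf1) / (lam b - 1) ^ 2 * lam b)
    with (exp (- b * Hinf1) * lam b / (lam b - 1) ^ 2) by (field; lra).
  exact B.
Qed.

Lemma Ftb_H0_eq : Ftb H0 b (lam b) = exp (- b * Hinf0) / (lam b - 1) ^ 2 * (lam b + r0 b).
Proof. pose proof lam_gt_1. pose proof (exp_pos (- b * Hinf0)). unfold r0. field. lra. Qed.

Lemma Ftb_H1_eq : Ftb H1 b (lam b) = exp (- b * Hinf1) / (lam b - 1) ^ 2 * (lam b + r1 b).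
Proof. pose proof lam_gt_1. pose proof (exp_pos (- b * Hinf1)). unfold r1. field. lra. Qed.

Lemma mu_ratio_eq :
  mu_cyl (Phi b) (nu b) false / mu_cyl (Phi b) (nu b) true
    = (y b + d0 b) ^ 2 * (lam b + r1 b) / (lam b + r0 b).
Proof.
  pose proof lam_gt_1. pose proof (A_pos b). pose proof (E_pos b). pose proof y_pos.
  pose proof (Ftb_level_pos H H0 H1 b (lam b) (nu b) HR Hb (Heigm b Hb) false) as P0. simpl in P0.
  assert (0 < lam b + r0 b).
  { rewrite Ftb_H0_eq in P0. pose proof (exp_pos (- b * Hinf0)).
    assert (0 < exp (- b * Hinf0) / (lam b - 1) ^ 2)
      by (apply Rdiv_lt_0_compat; [lra | apply pow_lt; lra]).
    nra. }
  rewrite (mu_cyl_ratio H H0 H1 Hinf0 Hinf1 b (lam b) (nu b) (Phi b) HR C0 C1 Hb (Heigm b Hb)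
      (Heigf b Hb)).
  rewrite Fb_H0_eq, Ftb_H0_eq, Ftb_H1_eq, exp_Hinf0, exp_Hinf1. field. repeat split; lra.
Qed.

End AtBeta.

Lemma is_lim_E : is_lim E p_infty 0.
Proof. apply is_lim_exp_decay, Hgam. Qed.

Lemma is_lim_s0 : is_lim s0 p_infty 0.
Proof.
  apply (is_lim_ext (fun b => W0 * (b * exp (- b * eta0)))); [intros; unfold s0; ring|].
  rewrite <- (Rmult_0_r W0). apply is_lim_scal_R, is_lim_mult_exp_decay, He0.
Qed.

Lemma is_lim_s1 : is_lim s1 p_infty 0.
Proof.
  apply (is_lim_ext (fun b => W1 * (b * exp (- b * eta1)))); [intros; unfold s1; ring|].
  rewrite <- (Rmult_0_r W1). apply is_lim_scal_R, is_lim_mult_exp_decay, He1.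
Qed.

Lemma is_lim_e1_bound : is_lim (fun b => s1 b + kap * E b) p_infty 0.
Proof.
  replace (Finite 0) with (Finite (0 + kap * 0)) by (f_equal; ring).
  apply is_lim_plus'; [apply is_lim_s1 | apply is_lim_scal_R, is_lim_E].
Qed.

Lemma is_lim_d0 : is_lim d0 p_infty 0.
Proof.
  apply (is_lim_abs_le _ s0); [|apply is_lim_s0].
  eapply filter_imp; [apply d0_bound | apply eventually_pos].
Qed.

Lemma is_lim_e1 : is_lim e1 p_infty 0.
Proof.
  apply (is_lim_abs_le _ (fun b => s1 b + kap * E b)); [|apply is_lim_e1_bound].
  eapply filter_imp; [apply e1_bound | apply eventually_pos].
Qed.

Lemma y_bounds : Rbar_locally p_infty (fun b => 0 < b /\ / y b <= 2 * kap + 4 /\ y b <= 2).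
Proof.
  pose proof kap_nonneg.
  assert (Ha : 0 < / (2 * kap + 4)) by (apply Rinv_0_lt_compat; lra).
  assert (Ha4 : / (2 * kap + 4) <= 1).
  { rewrite <- Rinv_1. apply Rinv_le_contravar; lra. }
  assert (T : is_lim (fun b => s0 b + (s1 b + kap * E b)) p_infty 0).
  { rewrite <- (Rplus_0_r 0). apply is_lim_plus'; [apply is_lim_s0 | apply is_lim_e1_bound]. }
  eapply filter_imp; [|apply filter_and; [apply eventually_pos | apply (eventually_lt _ _ _ T Ha)]].
  intros b [Hb Hs]. rewrite Rminus_0_r in Hs. split; auto.
  pose proof (d0_bound b Hb). pose proof (e1_bound b Hb). pose proof (Rabs_pos (d0 b)).
  pose proof (Rabs_pos (e1 b)).
  apply Rabs_lt_between in Hs.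
  destruct (perturbed_quadratic_bounds kap (y b) (d0 b) (Sr b) (e1 b) (s0 b + (s1 b + kap * E b)))
    as [Y1 Y2]; auto using y_pos, perturbed_quadratic, y_d0_pos, y_S_e1_pos; try lra.
  { split; [apply S_nonneg | apply S_bounds]; auto. }
  split; [|lra]. rewrite <- (Rinv_inv (2 * kap + 4)). apply Rinv_le_contravar; auto.
Qed.

Lemma is_lim_lam : is_lim lam p_infty 1.
Proof.
  apply (is_lim_le_le_loc (fun _ => 1) (fun b => 1 + (2 * kap + 4) * E b)).
  - eapply filter_imp; [|apply y_bounds]. intros b [Hb [Y1 Y2]].
    pose proof (lam_gt_1 b Hb). pose proof (E_pos b). split; [lra|].
    assert (E b / y b <= (2 * kap + 4) * E b).
    { unfold Rdiv. rewrite Rmult_comm. apply Rmult_le_compat_r; lra. }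
    pose proof (lam_minus_1_eq b Hb). lra.
  - apply is_lim_const.
  - replace (Finite 1) with (Finite (1 + (2 * kap + 4) * 0)) by (f_equal; ring).
    apply is_lim_plus'; [apply is_lim_const | apply is_lim_scal_R, is_lim_E].
Qed.

Lemma is_lim_Sr : is_lim Sr p_infty kap.
Proof.
  apply (is_lim_le_le_loc (fun b => kap * / lam b ^ K) (fun _ => kap)).
  - eapply filter_imp; [apply S_bounds | apply eventually_pos].
  - replace (Finite kap) with (Finite (kap * / 1 ^ K)) by (f_equal; rewrite pow1, Rinv_1; ring).
    apply is_lim_scal_R. apply (is_lim_inv (fun b => lam b ^ K) p_infty (1 ^ K)).
    + apply is_lim_pow_R, is_lim_lam.
    + rewrite pow1. injection; lra.
  - apply is_lim_const.
Qed.

(* Eliminating [d0] from the quadratic relation shows that [y] nearly solves [y^2 + kappa y = 1]. *)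
Lemma quadratic_defect_bound b : 0 < b -> y b <= 2 -> Rabs (e1 b) <= 1 ->
  Rabs (y b * y b + kap * y b - 1) <= (3 + kap) * Rabs (d0 b) + 2 * ((kap - Sr b) + Rabs (e1 b)).
Proof.
  intros Hb Y2 He. pose proof (perturbed_quadratic b Hb) as Q.
  destruct (S_bounds b Hb) as [_ S2]. pose proof (S_nonneg b Hb). pose proof (y_pos b Hb).
  replace (y b * y b + kap * y b - 1) with (- (d0 b * (y b + Sr b + e1 b) + y b * (Sr b - kap + e1 b)))
    by (rewrite <- Q; ring).
  rewrite Rabs_Ropp. eapply Rle_trans; [apply Rabs_triang|]. rewrite !Rabs_mult.
  pose proof (Rabs_pos (d0 b)). pose proof (proj1 (Rabs_le_between _ _) He).
  assert (Rabs (y b + Sr b + e1 b) <= 3 + kap) by (apply Rabs_le; lra).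
  assert (Rabs (Sr b - kap + e1 b) <= (kap - Sr b) + Rabs (e1 b)).
  { eapply Rle_trans; [apply Rabs_triang|]. rewrite Rabs_left1 by lra. lra. }
  rewrite (Rabs_right (y b)) by lra.
  assert (Rabs (d0 b) * Rabs (y b + Sr b + e1 b) <= Rabs (d0 b) * (3 + kap))
    by (apply Rmult_le_compat_l; lra).
  assert (y b * Rabs (Sr b - kap + e1 b) <= 2 * ((kap - Sr b) + Rabs (e1 b)))
    by (apply Rmult_le_compat; try lra; apply Rabs_pos).
  lra.
Qed.

Let c := kappa_root kap.

Lemma c_pos : 0 < c.
Proof. apply kappa_root_spec, kap_nonneg. Qed.

Lemma is_lim_y : is_lim y p_infty (/ c).
Proof.
  apply is_lim_of_dev,
    (is_lim_abs_le _ (fun b => c * ((3 + kap) * s0 b + 2 * ((kap - Sr b) + (s1 b + kap * E b))))).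
  - eapply filter_imp;
      [|apply filter_and; [apply y_bounds | apply (eventually_lt _ _ _ is_lim_e1 Rlt_0_1)]].
    intros b [[Hb [_ Y]] He]. rewrite Rminus_0_r in He.
    eapply Rle_trans; [apply kappa_root_dist; [apply kap_nonneg | apply y_pos, Hb]|].
    apply Rmult_le_compat_l; [left; apply c_pos|].
    eapply Rle_trans; [apply quadratic_defect_bound; auto; lra|].
    pose proof (d0_bound b Hb). pose proof (e1_bound b Hb). pose proof kap_nonneg. nra.
  - replace (Finite 0) with (Finite (c * ((3 + kap) * 0 + 2 * ((kap - kap) + 0)))) by (f_equal; ring).
    apply is_lim_scal_R, is_lim_plus'; [apply is_lim_scal_R, is_lim_s0|].
    apply is_lim_scal_R, is_lim_plus'; [|apply is_lim_e1_bound].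
    apply is_lim_minus'; [apply is_lim_const | apply is_lim_Sr].
Qed.

Lemma is_lim_r0 : is_lim r0 p_infty 0.
Proof.
  apply (is_lim_abs_le _ (fun b => (2 * kap + 4) * s0 b)).
  - eapply filter_imp; [|apply y_bounds]. intros b [Hb [Y1 Y2]].
    eapply Rle_trans; [apply r0_bound, Hb|]. pose proof (s0_nonneg b Hb).
    unfold Rdiv. rewrite Rmult_comm. apply Rmult_le_compat_r; auto.
  - rewrite <- (Rmult_0_r (2 * kap + 4)). apply is_lim_scal_R, is_lim_s0.
Qed.

Lemma is_lim_r1 : is_lim r1 p_infty 0.
Proof.
  apply (is_lim_abs_le _ (fun b => (2 * kap + 4) * s1 b + kap * INR K * (2 * kap + 4) ^ 2 * E b)).
  - eapply filter_imp; [|apply y_bounds]. intros b [Hb [Y1 Y2]].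
    eapply Rle_trans; [apply r1_bound, Hb|]. pose proof (y_pos b Hb). pose proof kap_nonneg.
    pose proof (E_pos b). pose proof (pos_INR K). pose proof (s1_nonneg b Hb).
    assert (0 < / y b) by (apply Rinv_0_lt_compat; lra).
    unfold Rdiv. rewrite <- pow_inv. apply Rplus_le_compat.
    + rewrite Rmult_comm. apply Rmult_le_compat_r; lra.
    + replace (kap * INR K * E b * / y b ^ 2) with (kap * INR K * E b * (/ y b) ^ 2)
      by (rewrite pow_inv; auto).
      replace (kap * INR K * (2 * kap + 4) ^ 2 * E b)
        with (kap * INR K * E b * (2 * kap + 4) ^ 2) by ring.
      apply Rmult_le_compat_l; [apply Rmult_le_pos; [apply Rmult_le_pos|]; lra|].
      apply pow_incr. lra.
  - replace (Finite 0) with (Finite ((2 * kap + 4) * 0 + kap * INR K * (2 * kap + 4) ^ 2 * 0)) by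
      (f_equal; ring).
    apply is_lim_plus'; apply is_lim_scal_R; [apply is_lim_s1 | apply is_lim_E].
Qed.

Lemma is_lim_y_d0 : is_lim (fun b => y b + d0 b) p_infty (/ c).
Proof. rewrite <- (Rplus_0_r (/ c)). apply is_lim_plus'; [apply is_lim_y | apply is_lim_d0]. Qed.

Lemma is_lim_c2_y2 : is_lim (fun b => c ^ 2 * (y b * y b)) p_infty 1.
Proof.
  pose proof c_pos. replace (Finite 1) with (Finite (c ^ 2 * (/ c * / c))) by (f_equal; field; lra).
  apply is_lim_scal_R, is_lim_mult_R; apply is_lim_y.
Qed.

Lemma is_lim_lam_plus (r : R -> R) : is_lim r p_infty 0 -> is_lim (fun b => lam b + r b) p_infty 1.
Proof. intros T. rewrite <- (Rplus_0_r 1). apply is_lim_plus'; [apply is_lim_lam | exact T]. Qed.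

Lemma is_lim_inv_c (f : R -> R) : is_lim f p_infty (/ c) -> is_lim (fun b => / (c * f b)) p_infty 1.
Proof.
  intros T. pose proof c_pos.
  replace (Finite 1) with (Rbar_inv (c * / c)) by (simpl; f_equal; field; lra).
  apply is_lim_inv; [apply is_lim_scal_R, T|]. rewrite Rinv_r by lra. injection; lra.
Qed.

Ltac at_beta tac := eapply filter_imp; [|apply eventually_pos]; intros ?b ?Hb;
  pose proof (lam_gt_1 b Hb); pose proof (y_pos b Hb); pose proof (A_pos b); pose proof (E_pos b);
  pose proof (y_d0_pos b Hb); pose proof c_pos; cbv beta; tac.

Lemma double_well_asymptotics :
  asym (fun b => lam b - 1) (fun b => c * exp (- b * gam)) /\
  asym (fun b => Fb H0 b (lam b)) (fun b => exp (- b * Hinf0) / (lam b - 1)) /\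
  asym (fun b => exp (- b * Hinf0) / (lam b - 1))
       (fun b => / c * exp (b * (Hinf1 - Hinf0) / 2)) /\
  asym (fun b => Ftb H0 b (lam b)) (fun b => exp (- b * Hinf0) / (lam b - 1) ^ 2) /\
  asym (fun b => exp (- b * Hinf0) / (lam b - 1) ^ 2)
       (fun b => / c ^ 2 * exp (b * Hinf1)) /\
  asym (fun b => Fb H1 b (lam b)) (fun b => c * exp (- b * (Hinf1 - Hinf0) / 2)) /\
  asym (fun b => Ftb H1 b (lam b)) (fun b => exp (- b * Hinf1) / (lam b - 1) ^ 2) /\
  asym (fun b => exp (- b * Hinf1) / (lam b - 1) ^ 2)
       (fun b => / c ^ 2 * exp (b * Hinf0)) /\
  lim_infty (fun b => mu_cyl (Phi b) (nu b) false / mu_cyl (Phi b) (nu b) true) (/ c ^ 2).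
Proof.
  assert (EA : forall b, exp (b * (Hinf1 - Hinf0) / 2) = A b) by (intros; exp_identity).
  assert (EA' : forall b, exp (- b * (Hinf1 - Hinf0) / 2) = / A b) by (intros; exp_identity).
  assert (E1 : forall b, exp (b * Hinf1) = A b / E b) by (intros; exp_identity).
  assert (E0 : forall b, exp (b * Hinf0) = / (A b * E b)) by (intros; exp_identity).
  repeat split.
  - apply (asym_of_is_lim _ _ (fun b => / (c * y b))); [|apply is_lim_inv_c, is_lim_y].
    at_beta ltac:(rewrite lam_minus_1_eq by auto; fold (E b); field; lra).
  - apply (asym_of_is_lim _ _ (fun b => (y b + d0 b) * / y b)).
    + at_beta ltac:(rewrite Fb_H0_eq, exp_Hinf0, lam_minus_1_eq by auto; field; lra).
    + pose proof c_pos. replace (Finite 1) with (Finite (/ c * / / c)) by (f_equal; field; lra).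
      apply is_lim_mult_R; [apply is_lim_y_d0 | apply (is_lim_inv y p_infty (/ c)); [apply is_lim_y|]].
      injection. apply Rinv_neq_0_compat. lra.
  - apply (asym_of_is_lim _ _ (fun b => c * y b)).
    + at_beta ltac:(rewrite EA, exp_Hinf0, lam_minus_1_eq by auto; field; lra).
    + pose proof c_pos. replace (Finite 1) with (Finite (c * / c)) by (f_equal; field; lra).
      apply is_lim_scal_R, is_lim_y.
  - apply (asym_of_is_lim _ _ (fun b => lam b + r0 b)); [|apply is_lim_lam_plus, is_lim_r0].
    at_beta ltac:(rewrite Ftb_H0_eq by auto; pose proof (exp_pos (- b * Hinf0));
                  field; repeat split; lra).
  - apply (asym_of_is_lim _ _ (fun b => c ^ 2 * (y b * y b))); [|apply is_lim_c2_y2].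
    at_beta ltac:(rewrite E1, exp_Hinf0, lam_minus_1_eq by auto; field; lra).
  - apply (asym_of_is_lim _ _ (fun b => / (c * (y b + d0 b)))); [|apply is_lim_inv_c, is_lim_y_d0].
    at_beta ltac:(pose proof (Fb_product H H0 H1 b (lam b) (nu b) HR Hb (Heigm b Hb)) as FP;
      rewrite Fb_H0_eq in FP; rewrite EA';
      replace (Fb H1 b (lam b)) with (/ (A b * (y b + d0 b)))
        by (apply (Rmult_eq_reg_l (A b * (y b + d0 b))); [rewrite Rinv_r|]; nra);
      field; lra).
  - apply (asym_of_is_lim _ _ (fun b => lam b + r1 b)); [|apply is_lim_lam_plus, is_lim_r1].
    at_beta ltac:(rewrite Ftb_H1_eq by auto; pose proof (exp_pos (- b * Hinf1));
                  field; repeat split; lra).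
  - apply (asym_of_is_lim _ _ (fun b => c ^ 2 * (y b * y b))); [|apply is_lim_c2_y2].
    at_beta ltac:(rewrite E0, exp_Hinf1, lam_minus_1_eq by auto; field; lra).
  - apply (lim_infty_of_is_lim _ (fun b => (y b + d0 b) ^ 2 * (lam b + r1 b) / (lam b + r0 b))).
    + at_beta ltac:(apply mu_ratio_eq; auto).
    + pose proof c_pos. replace (/ c ^ 2) with ((/ c) ^ 2 * 1 * / 1) by (field; lra).
      apply is_lim_mult_R;
        [apply is_lim_mult_R; [apply is_lim_pow_R, is_lim_y_d0 | apply is_lim_lam_plus, is_lim_r1]|].
      apply (is_lim_inv _ p_infty 1); [apply is_lim_lam_plus, is_lim_r0 | injection; lra].
Qed.

End Asymptotics.

Lemma variation_limit_bound (s : nat -> R) L k v :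
  Un_cv s L -> (forall n, Rabs (s k - s (k + n)%nat) <= v) -> Rabs (s k - L) <= v.
Proof.
  intros C Hv. apply Rnot_lt_le. intros Hl.
  destruct (C (Rabs (s k - L) - v)) as [N HN]; [lra|].
  specialize (HN (k + N)%nat ltac:(lia)). specialize (Hv N). unfold R_dist in HN.
  pose proof (Rabs_triang (s k - s (k + N)%nat) (s (k + N)%nat - L)).
  replace (s k - s (k + N)%nat + (s (k + N)%nat - L)) with (s k - L) in * by ring.
  lra.
Qed.

(* Beyond some [N] the terms are within [(L - a) / 2] of [L]; the finitely many before exceed [a]. *)
Lemma uniform_gap (s : nat -> R) L a (P : nat -> Prop) : Un_cv s L ->
  (forall k, (1 <= k)%nat -> P k -> a < s k) -> a < L ->
  exists eta, 0 < eta /\ (forall k, (1 <= k)%nat -> P k -> a + eta <= s k) /\ a + eta <= L.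
Proof.
  intros C Hs HL. destruct (C ((L - a) / 2)) as [N HN]; [lra|].
  assert (Fin : forall M, exists eta, 0 < eta /\
                  forall k, (1 <= k)%nat -> (k < M)%nat -> P k -> a + eta <= s k).
  { induction M as [|M [e [He HM]]]; [exists 1; split; [lra | intros; lia]|].
    destruct (classic ((1 <= M)%nat /\ P M)) as [[H1 H2]|Hn].
    - exists (Rmin e (s M - a)). pose proof (Hs M H1 H2). pose proof (Rmin_l e (s M - a)).
      pose proof (Rmin_r e (s M - a)). split; [apply Rmin_pos; lra|].
      intros k Hk1 Hk2 Hp. destruct (Nat.eq_dec k M) as [->|D]; [lra|].
      specialize (HM k Hk1 ltac:(lia) Hp). lra.
    - exists e. split; auto. intros k Hk1 Hk2 Hp. destruct (Nat.eq_dec k M) as [->|D]; [tauto|].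
      apply HM; auto; lia. }
  destruct (Fin N) as [e [He HF]].
  pose proof (Rmin_l e ((L - a) / 2)). pose proof (Rmin_r e ((L - a) / 2)).
  exists (Rmin e ((L - a) / 2)). split; [apply Rmin_pos; lra|]. split; [|lra].
  intros k Hk Hp. destruct (Compare_dec.lt_dec k N) as [L1|L1].
  - specialize (HF k Hk L1 Hp). lra.
  - specialize (HN k ltac:(lia)). unfold R_dist in HN. apply Rabs_def2 in HN. lra.
Qed.

Lemma list_upper_bound (l : list nat) : exists K, forall k, In k l -> (k <= K)%nat.
Proof.
  induction l as [|a l [K HK]]; [exists O; intros k []|].
  exists (max a K). intros k [->|Hk]; [lia|]. specialize (HK k Hk). lia.
Qed.

Theorem mainTheorem14
  (H : Sigma -> R) (H0 H1 : nat -> R) (Hinf0 Hinf1 : R) (kappa : nat)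
  (lam : R -> R) (Phi : R -> Sigma -> R) (nu : R -> (Sigma -> R) -> R) :
  reduced_double_well H H0 H1 ->
  Un_cv H0 Hinf0 -> Un_cv H1 Hinf1 ->
  Hinf0 <= Hinf1 ->
  0 < (Hinf1 + Hinf0) / 2 ->
  (forall n, (1 <= n)%nat -> (Hinf1 + Hinf0) / 2 <= H1 n + Hinf0) ->
  (exists l : list nat, NoDup l /\ length l = kappa /\
     forall n, In n l <-> ((1 <= n)%nat /\ (Hinf1 + Hinf0) / 2 = H1 n + Hinf0)) ->
  (forall beta, 0 < beta -> is_eigenfunction H beta (lam beta) (Phi beta)) ->
  (forall beta, 0 < beta -> is_eigenmeasure H beta (lam beta) (nu beta)) ->
  let gamma := (Hinf0 + Hinf1) / 2 in
  let c := (INR kappa + sqrt (INR kappa ^ 2 + 4)) / 2 in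
  asym (fun b => lam b - 1) (fun b => c * exp (- b * gamma)) /\
  asym (fun b => Fb H0 b (lam b)) (fun b => exp (- b * Hinf0) / (lam b - 1)) /\
  asym (fun b => exp (- b * Hinf0) / (lam b - 1))
       (fun b => / c * exp (b * (Hinf1 - Hinf0) / 2)) /\
  asym (fun b => Ftb H0 b (lam b)) (fun b => exp (- b * Hinf0) / (lam b - 1) ^ 2) /\
  asym (fun b => exp (- b * Hinf0) / (lam b - 1) ^ 2)
       (fun b => / c ^ 2 * exp (b * Hinf1)) /\
  asym (fun b => Fb H1 b (lam b)) (fun b => c * exp (- b * (Hinf1 - Hinf0) / 2)) /\
  asym (fun b => Ftb H1 b (lam b)) (fun b => exp (- b * Hinf1) / (lam b - 1) ^ 2) /\
  asym (fun b => exp (- b * Hinf1) / (lam b - 1) ^ 2)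
       (fun b => / c ^ 2 * exp (b * Hinf0)) /\
  lim_infty (fun b => mu_cyl (Phi b) (nu b) false / mu_cyl (Phi b) (nu b) true) (/ c ^ 2).
Proof.
  intros R C0 C1 Hle Hg Hmin [l [Nd [<- Hl]]] Heigf Heigm gamma c.
  pose proof R as (_ & _ & _ & _ & _ & _ & P0 & _ & [w0 [Hv0 [W0 HW0]]] & [w1 [Hv1 [W1 HW1]]]).
  destruct (uniform_gap H0 Hinf0 (- ((Hinf1 - Hinf0) / 2)) (fun _ => True) C0)
    as [eta0 [He0 [G0 G0']]]; [intros k Hk _; specialize (P0 k Hk); lra | lra|].
  destruct (uniform_gap H1 Hinf1 ((Hinf1 - Hinf0) / 2) (fun k => ~ In k l) C1)
    as [eta1 [He1 [G1 G1']]]; [|lra|].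
  { intros k Hk Hn. destruct (Rle_lt_or_eq _ _ (Hmin k Hk)) as [Q|Q]; [lra|].
    exfalso. apply Hn, Hl. auto. }
  destruct (list_upper_bound l) as [K HK].
  apply (double_well_asymptotics H H0 H1 w0 w1 Hinf0 Hinf1 W0 W1 eta0 eta1 l K lam Phi nu);
    auto; try lra.
  - intros k Hk. destruct (proj1 (Hl k) Hk). repeat split; auto. lra.
  - intros k Hk. apply (variation_limit_bound H0 Hinf0 k (w0 k) C0). intros n; apply Hv0, Hk.
  - apply is_series_Reals, HW0.
  - intros k Hk. apply (variation_limit_bound H1 Hinf1 k (w1 k) C1). intros n; apply Hv1, Hk.
  - apply is_series_Reals, HW1.
  - intros k Hk. specialize (G0 k Hk I). lra.
Qed.
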